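(* Let $\mathcal{C}$ be the class of all spaces homeomorphic to $\kappa\oplus(\lambda\times 2^\omega)\oplus(\mu\times\omega^\omega)$ for some cardinals $0\leq\kappa,\lambda,\mu\leq\omega$ (here $\kappa$, $\lambda$, $\mu$ carry the discrete topology and $\oplus$ denotes topological disjoint sum). Then $\mathcal{C}$ is closed under countable products: if $I$ is countable and $X_i\in\mathcal{C}$ for every $i\in I$, then $\prod_{i\in I}X_i\in\mathcal{C}$.
   Context: $2^\omega$ is the Cantor set and $\omega^\omega$ is the Baire space, both with the product topology. ''Countable'' means ''at most countable''. The empty product is the one-point space. *)

From Stdlib Require Import List.

Definition opens (T : Type) := (T -> Prop) -> Prop.

Definition is_topology {T : Type} (op : opens T) : Prop :=
  op (fun _ => False) /\ op (fun _ => True) /\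
  (forall U V, op U -> op V -> op (fun x => U x /\ V x)) /\
  (forall (J : Type) (U : J -> T -> Prop),
      (forall j, op (U j)) -> op (fun x => exists j, U j x)).

Definition continuous {A B : Type} (opA : opens A) (opB : opens B)
  (f : A -> B) : Prop :=
  forall V, opB V -> opA (fun a => V (f a)).

Definition homeomorphic {A B : Type} (opA : opens A) (opB : opens B) : Prop :=
  exists (f : A -> B) (g : B -> A),
    (forall a, g (f a) = a) /\ (forall b, f (g b) = b) /\
    continuous opA opB f /\ continuous opB opA g.

Definition countable (I : Type) : Prop :=
  exists f : I -> nat, forall i j, f i = f j -> i = j.

Definition discrete_open (T : Type) : opens T := fun _ => True.

Definition sum_open {A B : Type} (opA : opens A) (opB : opens B) : opens (A + B) :=
  fun U => opA (fun a => U (inl a)) /\ opB (fun b => U (inr b)).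

Definition prod2_open {A B : Type} (opA : opens A) (opB : opens B) : opens (A * B) :=
  fun U => forall p, U p -> exists V W, opA V /\ opB W /\ V (fst p) /\ W (snd p) /\
      (forall a b, V a -> W b -> U (a, b)).

Definition prod_open {I : Type} (T : I -> Type) (op : forall i, opens (T i))
  : opens (forall i, T i) :=
  fun U => forall x, U x ->
    exists (F : list I) (V : forall i, T i -> Prop),
      (forall i, In i F -> op i (V i)) /\
      (forall i, In i F -> V i (x i)) /\
      (forall y : forall i, T i, (forall i, In i F -> V i (y i)) -> U y).

Definition cantor_open : opens (nat -> bool) :=
  @prod_open nat (fun _ => bool) (fun _ => discrete_open bool).
Definition baire_open : opens (nat -> nat) :=
  @prod_open nat (fun _ => nat) (fun _ => discrete_open nat).

(* Cardinals 0 <= kappa <= omega: Some n is the finite cardinal n,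
   None is omega. card_type k is the underlying set of that cardinal. *)
Definition card_type (k : option nat) : Type :=
  match k with
  | Some n => {m : nat | m < n}
  | None => nat
  end.

Definition model_type (k l m : option nat) : Type :=
  card_type k + ((card_type l * (nat -> bool)) + (card_type m * (nat -> nat))).

Definition model_open (k l m : option nat) : opens (model_type k l m) :=
  sum_open (discrete_open (card_type k))
    (sum_open (prod2_open (discrete_open (card_type l)) cantor_open)
              (prod2_open (discrete_open (card_type m)) baire_open)).

Definition in_C {T : Type} (op : opens T) : Prop :=
  exists k l m : option nat, homeomorphic op (model_open k l m).

From Stdlib Require Import List.
From Stdlib Require Import Arith Lia Classical ClassicalEpsilon FunctionalExtensionality
  ProofIrrelevance Cantor.
Import ListNotations.

(* All spaces are handled as "coded spaces": a type X with an injective code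
   enc : X -> nat -> nat whose image is closed, topologized by the cylinders
   [x|n] = {y | enc y agrees with enc x below n}.  A coded space is thus a
   closed subspace of the Baire space, whose shape is read off the tree of
   finite code prefixes.

   1. A nested splitting scheme of cylinders indexed by digits in D yields a
      homeomorphism between D^ω and a cylinder ([scheme_parametrization]).
   2. A cylinder is isolated, Cantor-like or Baire-like according to how its
      subtree branches; by 1, Cantor-like cylinders are parametrized by 2^ω
      ([cantor_cylinder]) and Baire-like ones by ω^ω ([baire_cylinder]).
   3. Each model space has a code (unary summand tag, index, coordinate) that
      describes its topology, whose tree branches into at most {0,1} or into
      all digits at every node, and in which every point has a shaped cylinder.
   4. Conversely ([classification]), any coded space with these two tree
      properties is in C: the least shaped cylinders form a countable clopen
      partition into pieces of three kinds, counted by κ, λ and μ.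
   5. A countable product of model spaces is coded by interleaving the factor
      codes along Cantor's pairing; the two tree properties pass to the
      product ([prod_dichotomous], [prod_shaped]), so it is in C.
   6. The theorem follows by transporting the factors' homeomorphisms with
      model spaces to the product. *)

Definition agree {A : Type} (n : nat) (f g : nat -> A) : Prop :=
  forall i, i < n -> f i = g i.

Lemma agree_refl {A} n (f : nat -> A) : agree n f f.
Proof. intros i _; reflexivity. Qed.
Lemma agree_trans {A} n (f g h : nat -> A) : agree n f g -> agree n g h -> agree n f h.
Proof. intros H1 H2 i Hi; rewrite H1; auto. Qed.
Lemma agree_le {A} n m (f g : nat -> A) : m <= n -> agree n f g -> agree m f g.
Proof. intros Hm H i Hi; apply H; lia. Qed.

Lemma ex_least (P : nat -> Prop) m : P m -> exists k, P k /\ forall p, p < k -> ~ P p.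
Proof.
  revert P. induction m as [m IH] using lt_wf_ind. intros P Hm.
  destruct (classic (exists p, p < m /\ P p)) as [[p [Hp1 Hp2]]|H].
  - apply (IH p Hp1 P Hp2).
  - exists m; split; auto. intros p Hp Hq; apply H; eauto.
Qed.

Section Coded.
Variable X : Type.
Variable enc : X -> nat -> nat.

Definition cyl (x : X) (n : nat) (y : X) : Prop := agree n (enc y) (enc x).
Definition cyl_open (U : X -> Prop) : Prop :=
  forall x, U x -> exists n, forall y, cyl x n y -> U y.
Definition has_child (x : X) (n j : nat) : Prop := exists y, cyl x n y /\ enc y n = j.
Definition code_closed : Prop := forall g : nat -> nat,
  (forall n, exists x, agree n (enc x) g) -> exists x, forall i, enc x i = g i.
Definition code_injective : Prop := forall x y, (forall i, enc x i = enc y i) -> x = y.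

Lemma cyl_refl x n : cyl x n x.
Proof. apply agree_refl. Qed.
Lemma cyl_trans x n y m z : n <= m -> cyl x n y -> cyl y m z -> cyl x n z.
Proof. unfold cyl; intros Hnm H1 H2 i Hi. rewrite H2 by lia. auto. Qed.
Lemma cyl_sym x n y : cyl x n y -> cyl y n x.
Proof. unfold cyl; intros H i Hi; symmetry; auto. Qed.
Lemma cyl_le x n m y : m <= n -> cyl x n y -> cyl x m y.
Proof. unfold cyl; intros; eapply agree_le; eauto. Qed.
End Coded.
Arguments cyl {X} enc x n y.
Arguments cyl_open {X} enc U.
Arguments has_child {X} enc x n j.
Arguments code_closed {X} enc.
Arguments code_injective {X} enc.
Arguments cyl_refl {X} enc x n.
Arguments cyl_trans {X} enc x n y m z.
Arguments cyl_sym {X} enc x n y.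
Arguments cyl_le {X} enc x n m y.

(* A node of the code tree is a pair (x, n) standing for the cylinder [x|n]. *)
Definition in_node {X} (enc : X -> nat -> nat) (a : X * nat) (y : X) : Prop :=
  cyl enc (fst a) (snd a) y.

(* [F] and [G] are mutually inverse continuous maps between the cylinder
   [x0|n0] and D^ω (F is only meaningful on the cylinder). *)
Definition parametrizes {X D : Type} (enc : X -> nat -> nat) (x0 : X) (n0 : nat)
    (F : X -> nat -> D) (G : (nat -> D) -> X) : Prop :=
  (forall z, cyl enc x0 n0 (G z)) /\ (forall z k, F (G z) k = z k) /\
  (forall y, cyl enc x0 n0 y -> G (F y) = y) /\
  (forall z N z', agree N z' z -> agree N (enc (G z')) (enc (G z))) /\
  (forall y, cyl enc x0 n0 y -> forall k, exists N,
      forall y', cyl enc y N y' -> agree k (F y') (F y)).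

Definition splits {X D : Type} (enc : X -> nat -> nat) (a : X * nat) (N : D -> X * nat) : Prop :=
  (forall d, snd (N d) > snd a /\ in_node enc a (fst (N d))) /\
  (forall y, in_node enc a y -> exists d, in_node enc (N d) y) /\
  (forall d d' y, in_node enc (N d) y -> in_node enc (N d') y -> d = d').

(* Iterating the refinement along z : nat -> D gives a
   nested sequence of nodes meeting in a single point [intersection z], and
   the digits of the children visited by a point y form its [address].
   Since the code image is closed and the code injective, [address] and
   [intersection] are inverse continuous maps: the root cylinder is
   homeomorphic to D^ω. *)
Section Scheme.
Variable X : Type.
Variable enc : X -> nat -> nat.
Hypothesis enc_closed : code_closed enc.
Hypothesis enc_inj : code_injective enc.
Variable D : Type.
Variable d0 : D.
Variable refine : X * nat -> D -> X * nat.
Variable admissible : X * nat -> Prop.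
Variable root : X * nat.
Hypothesis root_admissible : admissible root.
Hypothesis refine_admissible : forall a d, admissible a -> admissible (refine a d).
Hypothesis refine_splits : forall a, admissible a -> splits enc a (refine a).
Notation inn := (in_node enc).

Lemma refine_deeper a d : admissible a -> snd (refine a d) > snd a /\ inn a (fst (refine a d)).
Proof. intros Ha. apply (refine_splits a Ha). Qed.

Definition digit_of (a : X * nat) (y : X) : D :=
  match excluded_middle_informative (exists d, inn (refine a d) y) with
  | left h => proj1_sig (constructive_indefinite_description _ h)
  | right _ => d0 end.

Lemma digit_of_spec a y : admissible a -> inn a y -> inn (refine a (digit_of a y)) y.
Proof.
  intros Ha Hy. unfold digit_of. destruct excluded_middle_informative as [h|h].
  - exact (proj2_sig (constructive_indefinite_description _ h)).
  - exfalso; apply h. apply (refine_splits a Ha); auto.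
Qed.
Lemma digit_of_unique a y d : admissible a -> inn (refine a d) y -> digit_of a y = d.
Proof.
  intros Ha Hy. unfold digit_of. destruct excluded_middle_informative as [h|h].
  - eapply (refine_splits a Ha); eauto. exact (proj2_sig (constructive_indefinite_description _ h)).
  - exfalso; apply h; eauto.
Qed.

Fixpoint node_at (z : nat -> D) (k : nat) : X * nat :=
  match k with 0 => root | S k => refine (node_at z k) (z k) end.

Lemma node_at_admissible z k : admissible (node_at z k).
Proof. induction k; simpl; auto. Qed.
Lemma node_at_depth z k : snd (node_at z k) >= k.
Proof.
  induction k; simpl. lia.
  destruct (refine_deeper (node_at z k) (z k) (node_at_admissible z k)). lia.
Qed.
Lemma node_at_nested z k k' : k <= k' ->
  snd (node_at z k) <= snd (node_at z k') /\ inn (node_at z k) (fst (node_at z k')).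
Proof.
  induction 1.
  - split; [lia|apply cyl_refl].
  - simpl. destruct (refine_deeper (node_at z m) (z m) (node_at_admissible z m)) as [A B].
    destruct IHle as [C E]. split; [lia|].
    eapply cyl_trans; [exact C|exact E|exact B].
Qed.
Lemma node_at_sub z k k' y : k <= k' -> inn (node_at z k') y -> inn (node_at z k) y.
Proof. intros H Hy. destruct (node_at_nested z k k' H). eapply cyl_trans; eauto. Qed.
Lemma node_at_agree z z' N : agree N z' z -> forall k, k <= N -> node_at z' k = node_at z k.
Proof.
  intros H k; induction k; simpl; intros; auto. rewrite IHk by lia. rewrite H by lia. auto.
Qed.

(* The code of the intersection point: digit i is read at node i+1. *)
Definition limit_code (z : nat -> D) (i : nat) : nat := enc (fst (node_at z (S i))) i.

Lemma limit_code_approx z n : exists x, agree n (enc x) (limit_code z).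
Proof.
  exists (fst (node_at z n)). intros i Hi. unfold limit_code.
  destruct (node_at_nested z (S i) n ltac:(lia)) as [A B]. apply B.
  pose proof (node_at_depth z (S i)). lia.
Qed.

Definition intersection (z : nat -> D) : X :=
  proj1_sig (constructive_indefinite_description _
    (enc_closed (limit_code z) (limit_code_approx z))).
Lemma intersection_code z i : enc (intersection z) i = limit_code z i.
Proof.
  exact (proj2_sig (constructive_indefinite_description _
    (enc_closed (limit_code z) (limit_code_approx z))) i).
Qed.

Lemma intersection_in z k : inn (node_at z k) (intersection z).
Proof.
  intros i Hi. rewrite intersection_code. unfold limit_code.
  destruct (le_lt_dec (S i) k).
  - destruct (node_at_nested z (S i) k l) as [A B]. symmetry. apply B.
    pose proof (node_at_depth z (S i)); lia.
  - destruct (node_at_nested z k (S i) ltac:(lia)) as [A B]. apply B. auto.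
Qed.

Fixpoint path (y : X) (k : nat) : X * nat :=
  match k with 0 => root | S k => refine (path y k) (digit_of (path y k) y) end.
Definition address (y : X) (k : nat) : D := digit_of (path y k) y.

Lemma path_node_at y k : path y k = node_at (address y) k.
Proof. induction k; simpl; auto. rewrite <- IHk. reflexivity. Qed.

Lemma path_in y : inn root y -> forall k, inn (path y k) y.
Proof.
  intros Hy k; induction k; simpl; auto.
  apply digit_of_spec; auto. rewrite path_node_at. apply node_at_admissible.
Qed.

Lemma path_stable y y' k : inn (path y k) y' -> forall j, j <= k -> path y' j = path y j.
Proof.
  intros Hin. induction j; simpl; intros; auto. rewrite IHj by lia.
  f_equal. apply digit_of_unique; [rewrite path_node_at; apply node_at_admissible|].
  change (inn (path y (S j)) y'). rewrite path_node_at in Hin |- *.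
  eapply node_at_sub; [|exact Hin]. lia.
Qed.

Lemma address_intersection z k : address (intersection z) k = z k.
Proof.
  assert (Hp : forall k, path (intersection z) k = node_at z k).
  { induction k0; simpl; auto. rewrite IHk0. f_equal. apply digit_of_unique.
    apply node_at_admissible. apply (intersection_in z (S k0)). }
  unfold address. rewrite Hp. apply digit_of_unique. apply node_at_admissible. apply (intersection_in z (S k)).
Qed.

Lemma intersection_address y : inn root y -> intersection (address y) = y.
Proof.
  intros Hy. apply enc_inj. intros i.
  pose proof (intersection_in (address y) (S i)) as A. pose proof (path_in y Hy (S i)) as B.
  rewrite path_node_at in B. pose proof (node_at_depth (address y) (S i)).
  unfold in_node, cyl in *. rewrite A by lia. rewrite B by lia. auto.
Qed.

Lemma intersection_continuous z N z' : agree N z' z -> agree N (enc (intersection z')) (enc (intersection z)).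
Proof.
  intros H i Hi. pose proof (node_at_agree z z' N H N (le_n _)) as E.
  pose proof (intersection_in z N) as A. pose proof (intersection_in z' N) as B. rewrite E in B.
  pose proof (node_at_depth z N). unfold in_node, cyl in *. rewrite A, B by lia; auto.
Qed.

Lemma address_continuous y : inn root y -> forall k, exists N,
  forall y', cyl enc y N y' -> agree k (address y') (address y).
Proof.
  intros Hy k. exists (snd (path y k)). intros y' Hy'.
  assert (Hin : inn (path y k) y').
  { pose proof (path_in y Hy k) as P. intros i Hi. rewrite Hy' by auto. apply P; auto. }
  intros i Hi. unfold address. rewrite (path_stable y y' k Hin i) by lia.
  apply digit_of_unique; [rewrite path_node_at; apply node_at_admissible|].
  change (inn (path y (S i)) y'). rewrite path_node_at in Hin |- *.
  eapply node_at_sub; [|exact Hin]. lia.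
Qed.

Theorem scheme_parametrization : exists (F : X -> nat -> D) G, parametrizes enc (fst root) (snd root) F G.
Proof.
  exists address, intersection. repeat split.
  - intros z. exact (intersection_in z 0).
  - apply address_intersection.
  - apply intersection_address.
  - apply intersection_continuous.
  - apply address_continuous.
Qed.
End Scheme.

Notation binary enc x n := (forall j, has_child enc x n j -> j <= 1).
Notation full enc x n := (forall j, has_child enc x n j).

Section Shapes.
Variable X : Type.
Variable enc : X -> nat -> nat.

Definition dichotomous : Prop := forall x n, binary enc x n \/ full enc x n.
Definition isolated (x : X) (n : nat) : Prop :=
  forall y y', cyl enc x n y -> cyl enc x n y' -> y = y'.
Definition cantor_like (x : X) (n : nat) : Prop :=
  (forall y m, n <= m -> cyl enc x n y -> binary enc y m) /\
  (forall y m, n <= m -> cyl enc x n y -> exists z m', m <= m' /\ cyl enc y m z /\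
      has_child enc z m' 0 /\ has_child enc z m' 1).
Definition baire_like (x : X) (n : nat) : Prop :=
  forall y m, n <= m -> cyl enc x n y -> exists z m', m <= m' /\ cyl enc y m z /\ full enc z m'.

Lemma isolated_sub x n y m : isolated x n -> n <= m -> cyl enc x n y -> isolated y m.
Proof. intros A Hm Hy y1 y2 H1 H2. apply A; eapply cyl_trans; eauto. Qed.
Lemma cantor_like_sub x n y m : cantor_like x n -> n <= m -> cyl enc x n y -> cantor_like y m.
Proof.
  intros [A B] Hm Hy. split.
  - intros y' m' H1 H2 j H3. eapply A; [|eapply cyl_trans; [|exact Hy|exact H2]|exact H3]; lia.
  - intros y' m' H1 H2. eapply B; [|eapply cyl_trans; [|exact Hy|exact H2]]; lia.
Qed.
Lemma baire_like_sub x n y m : baire_like x n -> n <= m -> cyl enc x n y -> baire_like y m.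
Proof. intros A Hm Hy y' m' H1 H2. eapply A; [|eapply cyl_trans; [|exact Hy|exact H2]]; lia. Qed.

Definition shaped (x : X) (n : nat) : Prop :=
  isolated x n \/ cantor_like x n \/ baire_like x n.
Lemma shaped_sub x n y : shaped x n -> cyl enc x n y -> shaped y n.
Proof.
  intros [H|[H|H]] Hy; [left|right; left|right; right].
  - eapply isolated_sub; eauto.
  - eapply cantor_like_sub; eauto.
  - eapply baire_like_sub; eauto.
Qed.

Lemma isolated_binary : dichotomous -> forall x n y m,
  isolated x n -> n <= m -> cyl enc x n y -> binary enc y m.
Proof.
  intros Hdich x n y m Hiso Hm Hy j [q [Hq Hj]].
  assert (Hyq : forall q, cyl enc y m q -> q = y) by (intros; apply Hiso; eauto using cyl_trans).
  rewrite (Hyq q Hq) in Hj. destruct (Hdich y m) as [A|A].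
  - apply A. exists y; split; [apply cyl_refl|auto].
  - destruct (A 0) as [q0 [H0 E0]]. destruct (A 1) as [q1 [H1 E1]].
    rewrite (Hyq q0 H0) in E0. rewrite (Hyq q1 H1) in E1. congruence.
Qed.

(* The chosen child of the node a with digit d (a itself if there is none). *)
Definition child_node (d : nat) (a : X * nat) : X * nat :=
  match excluded_middle_informative (exists w, in_node enc a w /\ enc w (snd a) = d) with
  | left h => (proj1_sig (constructive_indefinite_description _ h), S (snd a))
  | right _ => a end.

Lemma child_node_spec d a : has_child enc (fst a) (snd a) d ->
  snd (child_node d a) = S (snd a) /\ in_node enc a (fst (child_node d a)) /\
  enc (fst (child_node d a)) (snd a) = d.
Proof.
  intros H. unfold child_node. destruct excluded_middle_informative as [h|h]; [|contradiction].
  destruct (proj2_sig (constructive_indefinite_description _ h)). simpl; auto.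
Qed.
Lemma child_node_iff d a y : has_child enc (fst a) (snd a) d ->
  in_node enc (child_node d a) y <-> in_node enc a y /\ enc y (snd a) = d.
Proof.
  intros H. destruct (child_node_spec d a H) as [A [B C]]. unfold in_node. rewrite A. split.
  - intros Hy. split.
    + intros i Hi. rewrite Hy by lia. apply B; auto.
    + rewrite <- C. apply Hy. lia.
  - intros [Hy Hd] i Hi. destruct (Nat.eq_dec i (snd a)).
    + subst; congruence.
    + rewrite Hy by lia. rewrite B by lia. auto.
Qed.
End Shapes.
Arguments dichotomous {X} enc.
Arguments isolated {X} enc x n.
Arguments cantor_like {X} enc x n.
Arguments baire_like {X} enc x n.
Arguments shaped {X} enc x n.
Arguments shaped_sub {X} enc x n y.
Arguments child_node {X} enc d a.

Definition bit (b : bool) : nat := if b then 1 else 0.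

(* Cantor-like cylinders are homeomorphic to 2^ω: refine a node by first
   descending to the first node below it with two children, then choosing
   the child 0 or 1. *)
Section CantorCylinder.
Variable X : Type.
Variable enc : X -> nat -> nat.
Hypothesis enc_closed : code_closed enc.
Hypothesis enc_inj : code_injective enc.

Definition first_split (a p : X * nat) : Prop :=
  snd a <= snd p /\ in_node enc a (fst p) /\
  has_child enc (fst p) (snd p) 0 /\ has_child enc (fst p) (snd p) 1 /\
  (forall y, in_node enc a y -> in_node enc p y).

Lemma unbranched_descent x n z k :
  (forall y m, n <= m -> cyl enc x n y -> binary enc y m) ->
  cyl enc x n z -> n <= k ->
  (forall p, n <= p < k -> ~ (has_child enc z p 0 /\ has_child enc z p 1)) ->
  forall y, cyl enc x n y -> cyl enc z k y.
Proof.
  intros Hbin Hz Hk Hnb. induction k as [|k IH]; intros y Hy.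
  - intros i Hi; lia.
  - destruct (Nat.eq_dec n (S k)) as [E|E].
    + subst. intros i Hi. rewrite Hy, Hz by lia. auto.
    + assert (Hyk : cyl enc z k y) by (apply IH; [lia|intros p Hp; apply Hnb; lia|auto]).
      intros i Hi. destruct (Nat.eq_dec i k); [subst i|apply Hyk; lia].
      assert (Cy : has_child enc z k (enc y k)) by (exists y; split; auto).
      assert (Cz : has_child enc z k (enc z k)) by (exists z; split; [apply cyl_refl|auto]).
      assert (Ly : enc y k <= 1) by (eapply (Hbin z k); eauto; lia).
      assert (Lz : enc z k <= 1) by (eapply (Hbin z k); eauto; lia).
      destruct (Nat.eq_dec (enc y k) (enc z k)) as [Eq|Ne]; auto.
      exfalso. apply (Hnb k); [lia|].
      destruct (enc y k) as [|[|]], (enc z k) as [|[|]]; try lia; split; auto.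
Qed.

Lemma first_split_exists a : cantor_like enc (fst a) (snd a) -> exists p, first_split a p.
Proof.
  destruct a as [x n]; simpl. intros [Hbin Hsplit].
  destruct (Hsplit x n (le_n _) (cyl_refl _ _ _)) as [z [m [Hm [Hz [H0 H1]]]]].
  destruct (ex_least (fun p => n <= p /\ has_child enc z p 0 /\ has_child enc z p 1) m)
    as [k [[Hk [K0 K1]] Kmin]]; [auto|].
  exists (z, k). repeat split; simpl; auto.
  apply (unbranched_descent x n z k); auto.
  intros p Hp Hc. apply (Kmin p); [lia|]. split; [lia|auto].
Qed.

Definition split_node (a : X * nat) : X * nat :=
  match excluded_middle_informative (exists p, first_split a p) with
  | left h => proj1_sig (constructive_indefinite_description _ h)
  | right _ => a end.
Lemma split_node_spec a : cantor_like enc (fst a) (snd a) -> first_split a (split_node a).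
Proof.
  intros H. unfold split_node. destruct excluded_middle_informative as [h|h].
  - exact (proj2_sig (constructive_indefinite_description _ h)).
  - exfalso; apply h; apply first_split_exists; auto.
Qed.

Definition cantor_refine (a : X * nat) (b : bool) : X * nat :=
  child_node enc (bit b) (split_node a).

Lemma cantor_refine_splits a : cantor_like enc (fst a) (snd a) -> splits enc a (cantor_refine a).
Proof.
  intros Ha. destruct (split_node_spec a Ha) as [P1 [P2 [P3 [P4 P5]]]].
  set (p := split_node a) in *.
  assert (Hc : forall b, has_child enc (fst p) (snd p) (bit b)) by (intros []; auto).
  split; [|split].
  - intros b. destruct (child_node_spec X enc (bit b) p (Hc b)) as [C1 [C2 _]].
    unfold cantor_refine. fold p. split; [lia|]. eapply cyl_trans; [exact P1|exact P2|exact C2].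
  - intros y Hy. pose proof (P5 y Hy) as Hyp.
    assert (Ly : enc y (snd p) <= 1).
    { apply ((proj1 Ha) (fst p) (snd p)); auto. exists y; split; auto. }
    exists (Nat.eqb (enc y (snd p)) 1). unfold cantor_refine. fold p.
    apply child_node_iff; auto. split; auto.
    destruct (Nat.eqb_spec (enc y (snd p)) 1); simpl; lia.
  - intros b b' y H1 H2. unfold cantor_refine in *. fold p in H1, H2.
    apply child_node_iff in H1; [|auto]. apply child_node_iff in H2; [|auto].
    destruct H1 as [_ E1], H2 as [_ E2]. rewrite E1 in E2. destruct b, b'; simpl in E2; congruence.
Qed.

Theorem cantor_cylinder (x0 : X) (n0 : nat) : cantor_like enc x0 n0 ->
  exists (F : X -> nat -> bool) G, parametrizes enc x0 n0 F G.
Proof.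
  intros HK.
  apply (scheme_parametrization X enc enc_closed enc_inj bool true cantor_refine
           (fun a => cantor_like enc (fst a) (snd a)) (x0, n0) HK).
  - intros a b Ha. destruct (cantor_refine_splits a Ha) as [S1 _].
    destruct (S1 b) as [D1 D2]. eapply cantor_like_sub; [exact Ha| |exact D2]. lia.
  - apply cantor_refine_splits.
Qed.
End CantorCylinder.

(* Below a node a, follow a
   point z down to the first node p with all digits as children; on the way
   every node has at most two children.  The cylinder a is then partitioned
   into countably many subnodes, indexed by ℕ: the siblings branching off the
   path of z, followed by the children of p. *)
Section BaireCylinder.
Variable X : Type.
Variable enc : X -> nat -> nat.
Hypothesis enc_closed : code_closed enc.
Hypothesis enc_inj : code_injective enc.
Hypothesis enc_dich : dichotomous enc.

Definition first_full (a p : X * nat) : Prop :=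
  snd a <= snd p /\ in_node enc a (fst p) /\ full enc (fst p) (snd p) /\
  (forall q, snd a <= q < snd p -> binary enc (fst p) q).

Lemma first_full_exists a : baire_like enc (fst a) (snd a) -> exists p, first_full a p.
Proof.
  destruct a as [x n]; simpl. intros HN.
  destruct (HN x n (le_n _) (cyl_refl _ _ _)) as [z [m [Hm [Hz Hfull]]]].
  destruct (ex_least (fun p => n <= p /\ full enc z p) m) as [k [[Hk Kfull] Kmin]].
  { auto. }
  exists (z, k). repeat split; simpl; auto.
  intros q Hq j Hj. destruct (enc_dich z q) as [A|A]; [eauto|].
  exfalso. apply (Kmin q); [lia|]. split; [lia|auto].
Qed.

Definition full_node (a : X * nat) : X * nat :=
  match excluded_middle_informative (exists p, first_full a p) with
  | left h => proj1_sig (constructive_indefinite_description _ h)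
  | right _ => a end.
Lemma full_node_spec a : baire_like enc (fst a) (snd a) -> first_full a (full_node a).
Proof.
  intros H. unfold full_node. destruct excluded_middle_informative as [h|h].
  - exact (proj2_sig (constructive_indefinite_description _ h)).
  - exfalso; apply h; apply first_full_exists; auto.
Qed.

(* The j-th piece of the partition of [z|p] by the k binary levels p..p+k-1
   of the path of z followed by the children at level p+k. *)
Fixpoint branch_node (z : X) (k p j : nat) {struct k} : X * nat :=
  match k with
  | 0 => child_node enc j (z, p)
  | S k' =>
    if excluded_middle_informative (has_child enc z p (1 - enc z p)) then
      match j with 0 => child_node enc (1 - enc z p) (z, p) | S j' => branch_node z k' (S p) j' end
    else branch_node z k' (S p) j
  end.

Lemma all_children_split z p : full enc z p ->
  splits enc (z, p) (fun j => child_node enc j (z, p)).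
Proof.
  intros Hall. split; [|split].
  - intros j. destruct (child_node_spec X enc j (z, p) (Hall j)) as [A [B _]].
    simpl in *. split; [lia|auto].
  - intros y Hy. exists (enc y p). apply child_node_iff; auto.
  - intros j j' y H1 H2. apply child_node_iff in H1; [|auto]. apply child_node_iff in H2; [|auto].
    simpl in *. destruct H1, H2; congruence.
Qed.

Lemma binary_level z p y : binary enc z p -> cyl enc z p y ->
  cyl enc z (S p) y \/ (has_child enc z p (1 - enc z p) /\ enc y p = 1 - enc z p).
Proof.
  intros Hbin Hy. destruct (Nat.eq_dec (enc y p) (enc z p)) as [E|E].
  - left. intros i Hi. destruct (Nat.eq_dec i p); [subst; auto|apply Hy; lia].
  - right. assert (enc y p <= 1) by (apply Hbin; exists y; auto).
    assert (enc z p <= 1) by (apply Hbin; exists z; split; [apply cyl_refl|auto]).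
    assert (Ey : enc y p = 1 - enc z p) by lia.
    split; [exists y; split|]; auto.
Qed.

(* A binary level p on top of a partition of [z|p+1]: the sibling of z at
   level p, if there is one, is added as piece 0. *)
Lemma branch_node_step z k p : binary enc z p ->
  splits enc (z, S p) (branch_node z k (S p)) -> splits enc (z, p) (branch_node z (S k) p).
Proof.
  intros Hbin [IA [IB IC]]. unfold in_node in *; simpl in *.
  assert (Below : forall j y, cyl enc (fst (branch_node z k (S p) j)) (snd (branch_node z k (S p) j)) y ->
                              cyl enc z (S p) y).
  { intros j y Hy. destruct (IA j) as [A B]. eapply cyl_trans; [|exact B|exact Hy]. lia. }
  destruct excluded_middle_informative as [Hsib|Hsib].
  - destruct (child_node_spec X enc _ (z, p) Hsib) as [C1 [C2 _]].
    split; [|split].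
    + intros [|j]; simpl in *; [split; [lia|auto]|].
      destruct (IA j) as [A B]. split; [lia|]. unfold in_node; simpl. eapply cyl_le; [|exact B]. lia.
    + intros y Hy. destruct (binary_level z p y Hbin Hy) as [H|[_ H]].
      * destruct (IB y H) as [j Hj]. exists (S j). auto.
      * exists 0. apply child_node_iff; auto.
    + assert (Off : forall j y, cyl enc (fst (branch_node z k (S p) j)) (snd (branch_node z k (S p) j)) y ->
                    in_node enc (child_node enc (1 - enc z p) (z, p)) y -> False).
      { intros j y H1 H2. apply child_node_iff in H2; [|auto]. destruct H2 as [_ H2]. cbn [snd] in H2.
        pose proof (Below j y H1 p ltac:(lia)). assert (enc z p <= 1).
        { apply Hbin. exists z; split; [apply cyl_refl|auto]. } lia. }
      intros [|j] [|j'] y H1 H2; auto; try (exfalso; eapply Off; eauto; fail).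
      f_equal. eauto.
  - split; [|split]; auto.
    + intros j. destruct (IA j) as [A B]. simpl. split; [lia|]. unfold in_node; simpl. eapply cyl_le; [|exact B]. lia.
    + intros y Hy. apply IB. destruct (binary_level z p y Hbin Hy) as [H|[H _]]; tauto.
Qed.

Lemma branch_node_splits z k : forall p, full enc z (p + k) ->
  (forall q, p <= q < p + k -> binary enc z q) ->
  splits enc (z, p) (branch_node z k p).
Proof.
  induction k as [|k IH]; intros p Hall Hbin.
  - rewrite Nat.add_0_r in Hall. apply all_children_split; auto.
  - apply branch_node_step; [apply Hbin; lia|]. apply IH.
    + replace (S p + k) with (p + S k) by lia. auto.
    + intros q Hq. apply Hbin. lia.
Qed.

Definition baire_refine (a : X * nat) (j : nat) : X * nat :=
  branch_node (fst (full_node a)) (snd (full_node a) - snd a) (snd a) j.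

Lemma baire_refine_splits a : baire_like enc (fst a) (snd a) -> splits enc a (baire_refine a).
Proof.
  intros Ha. destruct (full_node_spec a Ha) as [O1 [O2 [O3 O4]]].
  destruct (branch_node_splits (fst (full_node a)) (snd (full_node a) - snd a) (snd a)) as [A [B C]].
  { intros j. replace (snd a + (snd (full_node a) - snd a)) with (snd (full_node a)) by lia. auto. }
  { intros q Hq. apply O4. lia. }
  unfold baire_refine, in_node in *; simpl in *. split; [|split]; auto.
  - intros j. destruct (A j) as [A1 A2]. split; auto. eapply cyl_trans; [|exact O2|exact A2]. lia.
  - intros y Hy. apply B. intros i Hi. rewrite Hy by auto. symmetry. apply O2. auto.
Qed.

Theorem baire_cylinder (x0 : X) (n0 : nat) : baire_like enc x0 n0 ->
  exists (F : X -> nat -> nat) G, parametrizes enc x0 n0 F G.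
Proof.
  intros HN.
  apply (scheme_parametrization X enc enc_closed enc_inj nat 0 baire_refine
           (fun a => baire_like enc (fst a) (snd a)) (x0, n0) HN).
  - intros a j Ha. destruct (baire_refine_splits a Ha) as [S1 _].
    destruct (S1 j) as [D1 D2]. eapply baire_like_sub; [exact Ha| |exact D2]. lia.
  - apply baire_refine_splits.
Qed.
End BaireCylinder.

Definition prepend (l : list nat) (s : nat -> nat) (i : nat) : nat :=
  if i <? length l then nth i l 0 else s (i - length l).

Lemma prepend_lt l s i : i < length l -> prepend l s i = nth i l 0.
Proof. intros H. unfold prepend. destruct (Nat.ltb_spec i (length l)); auto; lia. Qed.
Lemma prepend_ge l s i : prepend l s (length l + i) = s i.
Proof. unfold prepend. destruct (Nat.ltb_spec (length l + i) (length l)); [lia|]. f_equal; lia. Qed.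
Lemma prepend_agree l t t' N : agree (length l + N) (prepend l t') (prepend l t) <-> agree N t' t.
Proof.
  split.
  - intros H i Hi. rewrite <- (prepend_ge l t' i), <- (prepend_ge l t i). apply H. lia.
  - intros H i Hi. destruct (le_lt_dec (length l) i).
    + replace i with (length l + (i - length l)) by lia. rewrite !prepend_ge. apply H. lia.
    + rewrite !prepend_lt; auto.
Qed.

Definition update {A : Type} (y : nat -> A) (t0 : nat) (j : A) : nat -> A :=
  fun i => if Nat.eqb i t0 then j else y i.
Lemma update_agree {A} (y : nat -> A) t0 j : agree t0 (update y t0 j) y.
Proof. intros i Hi. unfold update. destruct (Nat.eqb_spec i t0); auto; lia. Qed.
Lemma update_at {A} (y : nat -> A) t0 j : update y t0 j t0 = j.
Proof. unfold update. rewrite Nat.eqb_refl. auto. Qed.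

(* Unary tags: [utag c t] is the sequence 1^c 0 followed by t.  A tree of
   unary-tagged sequences branches only into {0,1} inside the tags. *)
Definition unary (c : nat) : list nat := repeat 1 c ++ [0].
Definition utag (c : nat) (t : nat -> nat) : nat -> nat := prepend (unary c) t.

Lemma unary_len c : length (unary c) = S c.
Proof. unfold unary. rewrite length_app, repeat_length. simpl. lia. Qed.
Lemma utag_lt c t i : i < c -> utag c t i = 1.
Proof.
  intros H. unfold utag. rewrite prepend_lt by (rewrite unary_len; lia). unfold unary.
  rewrite app_nth1 by (rewrite repeat_length; auto). apply nth_repeat_lt; auto.
Qed.
Lemma utag_eq c t : utag c t c = 0.
Proof.
  unfold utag. rewrite prepend_lt by (rewrite unary_len; lia). unfold unary.
  rewrite app_nth2 by (rewrite repeat_length; auto). rewrite repeat_length, Nat.sub_diag. auto.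
Qed.
Lemma utag_shift c t i : utag c t (S c + i) = t i.
Proof. unfold utag. rewrite <- (unary_len c). apply prepend_ge. Qed.

Lemma utag_det c c' t t' : agree (S c) (utag c' t') (utag c t) -> c' = c.
Proof.
  intros H. destruct (lt_eq_lt_dec c' c) as [[Hl|He]|Hl]; auto.
  - specialize (H c' ltac:(lia)). rewrite utag_eq, utag_lt in H by auto. discriminate.
  - specialize (H c ltac:(lia)). rewrite utag_eq, utag_lt in H by auto. discriminate.
Qed.
Lemma utag_agree c t t' N : agree (S c + N) (utag c t') (utag c t) <-> agree N t' t.
Proof. unfold utag. rewrite <- (unary_len c). apply prepend_agree. Qed.
Lemma utag_binary c c' t t' n : n <= c -> agree n (utag c' t') (utag c t) -> utag c' t' n <= 1.
Proof.
  intros Hn H. destruct (le_lt_dec n c') as [Hc'|Hc'].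
  - destruct (Nat.eq_dec n c'); [subst; rewrite utag_eq; lia|rewrite utag_lt by lia; lia].
  - specialize (H c' ltac:(lia)). rewrite utag_eq, utag_lt in H by lia. discriminate.
Qed.

Definition index_code (c : option nat) : card_type c -> list nat :=
  match c with Some n => fun a => unary (proj1_sig a) | None => fun a => [a] end.
Definition index_bound (c : option nat) : nat := match c with Some n => n | None => 1 end.

Lemma index_code_len c a : length (index_code c a) <= index_bound c.
Proof. destruct c; simpl in *. destruct a; simpl; rewrite unary_len; lia. lia. Qed.
Lemma index_code_det c a a' t t' :
  agree (length (index_code c a)) (prepend (index_code c a') t') (prepend (index_code c a) t) -> a' = a.
Proof.
  destruct c as [n|]; simpl in *.
  - destruct a as [a Ha], a' as [a' Ha']; simpl. rewrite unary_len. intros H.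
    assert (a' = a) by (eapply utag_det; exact H). subst. f_equal. apply proof_irrelevance.
  - intros H. specialize (H 0 ltac:(lia)). unfold prepend in H. simpl in H. auto.
Qed.

Lemma discrete_power_open_iff {A : Type} (V : (nat -> A) -> Prop) :
  prod_open (fun _ : nat => A) (fun _ => discrete_open A) V <->
  (forall x, V x -> exists K, forall y, agree K y x -> V y).
Proof.
  split.
  - intros H x Hx. destruct (H x Hx) as [F [W [W1 [W2 W3]]]].
    exists (S (list_max F)). intros y Hy. apply W3. intros i Hi.
    rewrite Hy; auto. assert (HF := proj1 (list_max_le F (list_max F)) (le_n _)).
    rewrite Forall_forall in HF. pose proof (HF i Hi). lia.
  - intros H x Hx. destruct (H x Hx) as [K HK].
    exists (seq 0 K), (fun i a => a = x i). split; [|split].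
    + intros; exact I.
    + intros; auto.
    + intros y Hy. apply HK. intros i Hi. apply Hy. apply in_seq. lia.
Qed.

(* The code of the model space κ ⊕ (λ × 2^ω) ⊕ (μ × ω^ω): a point is coded by
   a unary tag 0, 1 or 2 for its summand, the code of its index in κ, λ or μ
   (together the "header"), and its coordinate in 2^ω or ω^ω (the
   "payload"; constantly 0 for the summand κ). *)
Section ModelCode.
Variables k l m : option nat.
Notation M := (model_type k l m).

Definition tag (p : M) : nat := match p with inl _ => 0 | inr (inl _) => 1 | inr (inr _) => 2 end.
Definition rest (p : M) : nat -> nat :=
  match p with
  | inl a => prepend (index_code k a) (fun _ => 0)
  | inr (inl (a, x)) => prepend (index_code l a) (fun i => bit (x i))
  | inr (inr (a, y)) => prepend (index_code m a) y
  end.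
Definition model_code (p : M) : nat -> nat := utag (tag p) (rest p).
Definition header_len (p : M) : nat :=
  S (tag p) + match p with
              | inl a => length (index_code k a)
              | inr (inl (a, _)) => length (index_code l a)
              | inr (inr (a, _)) => length (index_code m a) end.

Notation code := model_code.

Lemma header_len_bound p : header_len p <= 3 + index_bound k + index_bound l + index_bound m.
Proof.
  pose proof (index_code_len k). pose proof (index_code_len l). pose proof (index_code_len m).
  destruct p as [a|[[a x]|[a y]]]; unfold header_len; simpl;
    [specialize (H a)|specialize (H0 a)|specialize (H1 a)]; lia.
Qed.

Lemma code_rest p i : code p (S (tag p) + i) = rest p i.
Proof. apply utag_shift. Qed.
Lemma tag_same p q n : S (tag p) <= n -> cyl code p n q -> tag q = tag p.
Proof. intros Hn H. apply (utag_det _ _ (rest p) (rest q)). apply (agree_le n); [lia|exact H]. Qed.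
Lemma rest_agree p q N : tag q = tag p -> cyl code p (S (tag p) + N) q <-> agree N (rest q) (rest p).
Proof. intros E. unfold cyl, code. rewrite E. apply utag_agree. Qed.

Lemma header_tag p q : cyl code p (header_len p) q -> tag q = tag p.
Proof. apply tag_same. unfold header_len. lia. Qed.
Lemma header_K a q : cyl code (inl a) (header_len (inl a)) q -> q = inl a.
Proof.
  intros H. assert (E := header_tag _ _ H).
  apply rest_agree in H; [|exact E].
  destruct q as [a'|[[a' x']|[a' y']]]; try discriminate. f_equal. eapply index_code_det, H.
Qed.
Lemma header_L a x q : cyl code (inr (inl (a, x))) (header_len (inr (inl (a, x)))) q ->
  exists x', q = inr (inl (a, x')).
Proof.
  intros H. assert (E := header_tag _ _ H).
  apply rest_agree in H; [|exact E].
  destruct q as [a'|[[a' x']|[a' y']]]; try discriminate. exists x'.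
  do 3 f_equal. eapply index_code_det, H.
Qed.
Lemma header_M a y q : cyl code (inr (inr (a, y))) (header_len (inr (inr (a, y)))) q ->
  exists y', q = inr (inr (a, y')).
Proof.
  intros H. assert (E := header_tag _ _ H).
  apply rest_agree in H; [|exact E].
  destruct q as [a'|[[a' x']|[a' y']]]; try discriminate. exists y'.
  do 3 f_equal. eapply index_code_det, H.
Qed.

Lemma agree_L a x x' N :
  cyl code (inr (inl (a, x))) (header_len (inr (inl (a, x))) + N) (inr (inl (a, x'))) <-> agree N x' x.
Proof.
  unfold header_len. rewrite <- Nat.add_assoc, rest_agree by reflexivity. simpl.
  rewrite prepend_agree. split.
  - intros H i Hi. specialize (H i Hi). cbv beta in H. destruct (x' i), (x i); simpl in H; congruence.
  - intros H i Hi. rewrite H; auto.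
Qed.
Lemma agree_M a y y' N :
  cyl code (inr (inr (a, y))) (header_len (inr (inr (a, y))) + N) (inr (inr (a, y'))) <-> agree N y' y.
Proof.
  unfold header_len. rewrite <- Nat.add_assoc, rest_agree by reflexivity. simpl. apply prepend_agree.
Qed.

Lemma payload_K a j : code (inl a) (header_len (inl a) + j) = 0.
Proof. unfold header_len. rewrite <- Nat.add_assoc, code_rest. apply prepend_ge. Qed.
Lemma payload_L a x j : code (inr (inl (a, x))) (header_len (inr (inl (a, x))) + j) = bit (x j).
Proof. unfold header_len. rewrite <- Nat.add_assoc, code_rest. apply prepend_ge. Qed.
Lemma payload_M a y j : code (inr (inr (a, y))) (header_len (inr (inr (a, y))) + j) = y j.
Proof. unfold header_len. rewrite <- Nat.add_assoc, code_rest. apply prepend_ge. Qed.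

Lemma model_code_injective : code_injective code.
Proof.
  intros p q H. assert (Hc : forall N, cyl code p N q) by (intros N i Hi; symmetry; auto).
  destruct p as [a|[[a x]|[a y]]].
  - symmetry. apply header_K, Hc.
  - destruct (header_L a x q (Hc _)) as [x' E]. subst q. do 3 f_equal.
    apply functional_extensionality. intros i. symmetry.
    apply (proj1 (agree_L a x x' (S i)) (Hc _)). lia.
  - destruct (header_M a y q (Hc _)) as [y' E]. subst q. do 3 f_equal.
    apply functional_extensionality. intros i. symmetry.
    apply (proj1 (agree_M a y y' (S i)) (Hc _)). lia.
Qed.

(* Headers have bounded length, so a limit of codes fixes the header of a
   point p0, and all good approximations share this header. *)
Lemma limit_header g : (forall n, exists p, agree n (code p) g) ->
  exists p0, forall i, exists p, agree (S i) (code p) g /\ cyl code p0 (header_len p0) p.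
Proof.
  intros Hg. set (B := 3 + index_bound k + index_bound l + index_bound m).
  destruct (Hg B) as [p0 Hp0]. exists p0. intros i.
  destruct (Hg (B + S i)) as [p Hp]. exists p. split.
  - eapply agree_le; [|exact Hp]. lia.
  - intros j Hj. pose proof (header_len_bound p0). rewrite Hp by lia. rewrite Hp0 by (unfold B; lia). auto.
Qed.

Lemma model_code_closed : code_closed code.
Proof.
  intros g Hg. destruct (limit_header g Hg) as [p0 Hs].
  destruct p0 as [a|[[a x]|[a y]]].
  - exists (inl a). intros i. destruct (Hs i) as [p [H1 H2]]. apply header_K in H2. subst p.
    apply H1. lia.
  - set (h := header_len (inr (inl (a, x)))).
    assert (P : forall x0 j, code (inr (inl (a, x0))) (h + j) = bit (x0 j)) by (intros; apply payload_L).
    exists (inr (inl (a, fun j => Nat.eqb (g (h + j)) 1))). intros i.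
    destruct (Hs i) as [p [H1 H2]]. destruct (header_L a x p H2) as [x' E]. subst p.
    destruct (le_lt_dec h i).
    + replace i with (h + (i - h)) by lia. rewrite P.
      rewrite <- (H1 (h + (i - h))) by lia. rewrite P. destruct (x' _); reflexivity.
    + rewrite <- (H1 i) by lia.
      apply (proj2 (agree_L a x' (fun j => Nat.eqb (g (h + j)) 1) 0)); [intros ? ?; lia|].
      change (i < h + 0). lia.
  - set (h := header_len (inr (inr (a, y)))).
    assert (P : forall y0 j, code (inr (inr (a, y0))) (h + j) = y0 j) by (intros; apply payload_M).
    exists (inr (inr (a, fun j => g (h + j)))). intros i.
    destruct (Hs i) as [p [H1 H2]]. destruct (header_M a y p H2) as [y' E]. subst p.
    destruct (le_lt_dec h i).
    + replace i with (h + (i - h)) by lia. rewrite P. reflexivity.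
    + rewrite <- (H1 i) by lia.
      apply (proj2 (agree_M a y' (fun j => g (h + j)) 0)); [intros ? ?; lia|].
      change (i < h + 0). lia.
Qed.
End ModelCode.

(* Branching of the model code tree: binary inside the tags, inside unary
   index codes and in the 2^ω payloads; full at an index of ω and in the
   ω^ω payloads. *)
Section ModelTree.
Variables k l m : option nat.
Notation code := (model_code k l m).
Notation tag := (tag k l m).
Notation rest := (rest k l m).

Lemma tag_region_binary p n : n <= tag p -> binary code p n.
Proof. intros Hn j [q [Hq Hj]]. subst j. eapply (utag_binary (tag p)); eauto. Qed.

Lemma index_region_binary p q n c tp c' tq : rest p = utag c tp -> rest q = utag c' tq ->
  S (tag p) <= n <= S (tag p) + c -> cyl code p n q -> code q n <= 1.
Proof.
  intros Hp Hq Hn Hpq. assert (E : tag q = tag p) by (apply (tag_same k l m p q n); [lia|auto]).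
  replace n with (S (tag q) + (n - S (tag p))) by lia. rewrite code_rest, Hq.
  apply (utag_binary c c' tp tq); [lia|]. rewrite <- Hp, <- Hq. apply rest_agree; auto.
  eapply cyl_le; [|exact Hpq]. lia.
Qed.
End ModelTree.

Lemma dichotomous_K k l m a n : binary (model_code k l m) (inl a) n \/ full (model_code k l m) (inl a) n.
Proof.
  destruct (le_lt_dec n 0) as [Hn|Hn]; [left; apply (tag_region_binary k l m); simpl; lia|].
  destruct (le_lt_dec (header_len k l m (inl a)) n) as [Hh|Hh].
  - left. intros j [q [Hq Hj]]. subst j. rewrite (header_K k l m a q (cyl_le _ _ _ _ _ Hh Hq)).
    replace n with (header_len k l m (inl a) + (n - header_len k l m (inl a))) by lia. rewrite payload_K. lia.
  - revert a Hh. destruct k as [c|]; intros a Hh.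
    + left. intros j [q [Hq Hj]]. subst j.
      assert (E : tag _ _ _ q = 0) by (apply (tag_same _ _ _ (inl a) q n); [simpl; lia|auto]).
      destruct q as [a'|[[a' x']|[a' y']]]; try discriminate.
      apply (index_region_binary _ _ _ (inl a) (inl a') n (proj1_sig a) (fun _ => 0) (proj1_sig a') (fun _ => 0));
        auto. unfold header_len in Hh; simpl in *. rewrite unary_len in Hh. lia.
    + right. unfold header_len in Hh. simpl in Hh. assert (n = 1) by lia. subst n.
      intros j. exists (inl j). split; [|reflexivity]. intros i Hi. assert (i = 0) by lia. subst. reflexivity.
Qed.

Lemma dichotomous_L k l m a x n :
  binary (model_code k l m) (inr (inl (a, x))) n \/ full (model_code k l m) (inr (inl (a, x))) n.
Proof.
  destruct (le_lt_dec n 1) as [Hn|Hn]; [left; apply (tag_region_binary k l m); simpl; lia|].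
  destruct (le_lt_dec (header_len k l m (inr (inl (a, x)))) n) as [Hh|Hh].
  - left. intros j [q [Hq Hj]]. subst j.
    destruct (header_L k l m a x q (cyl_le _ _ _ _ _ Hh Hq)) as [x' E]. subst q.
    set (h := header_len k l m (inr (inl (a, x)))) in *.
    assert (P : forall x0 j, model_code k l m (inr (inl (a, x0))) (h + j) = bit (x0 j)) by (intros; apply payload_L).
    replace n with (h + (n - h)) by lia. rewrite P. destruct (x' _); simpl; lia.
  - revert a Hh. destruct l as [c|]; intros a Hh.
    + left. intros j [q [Hq Hj]]. subst j.
      assert (E : tag _ _ _ q = 1) by (apply (tag_same _ _ _ (inr (inl (a, x))) q n); [simpl; lia|auto]).
      destruct q as [a'|[[a' x']|[a' y']]]; try discriminate.
      apply (index_region_binary _ _ _ (inr (inl (a, x))) (inr (inl (a', x'))) n (proj1_sig a)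
               (fun i => bit (x i)) (proj1_sig a') (fun i => bit (x' i))); auto.
      unfold header_len in Hh; simpl in *. rewrite unary_len in Hh. lia.
    + right. unfold header_len in Hh. simpl in Hh. assert (n = 2) by lia. subst n.
      intros j. exists (inr (inl (j, x))). split; [|reflexivity].
      intros i Hi. destruct i as [|[|]]; try lia; reflexivity.
Qed.

Lemma dichotomous_M k l m a y n :
  binary (model_code k l m) (inr (inr (a, y))) n \/ full (model_code k l m) (inr (inr (a, y))) n.
Proof.
  destruct (le_lt_dec n 2) as [Hn|Hn]; [left; apply (tag_region_binary k l m); simpl; lia|].
  destruct (le_lt_dec (header_len k l m (inr (inr (a, y)))) n) as [Hh|Hh].
  - right. set (h := header_len k l m (inr (inr (a, y)))) in *.
    assert (P : forall y0 j, model_code k l m (inr (inr (a, y0))) (h + j) = y0 j) by (intros; apply payload_M).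
    intros j. exists (inr (inr (a, update y (n - h) j))). split.
    + apply (cyl_le _ _ (h + (n - h))); [lia|]. apply agree_M, update_agree.
    + replace n with (h + (n - h)) at 2 by lia. rewrite P. apply update_at.
  - revert a Hh. destruct m as [c|]; intros a Hh.
    + left. intros j [q [Hq Hj]]. subst j.
      assert (E : tag _ _ _ q = 2) by (apply (tag_same _ _ _ (inr (inr (a, y))) q n); [simpl; lia|auto]).
      destruct q as [a'|[[a' x']|[a' y']]]; try discriminate.
      apply (index_region_binary _ _ _ (inr (inr (a, y))) (inr (inr (a', y'))) n (proj1_sig a) y
               (proj1_sig a') y'); auto.
      unfold header_len in Hh; simpl in *. rewrite unary_len in Hh. lia.
    + right. unfold header_len in Hh. simpl in Hh. assert (n = 3) by lia. subst n.
      intros j. exists (inr (inr (j, y))). split; [|reflexivity].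
      intros i Hi. destruct i as [|[|[|]]]; try lia; reflexivity.
Qed.

Lemma model_dichotomous k l m : dichotomous (model_code k l m).
Proof.
  intros [a|[[a x]|[a y]]] n; [apply dichotomous_K|apply dichotomous_L|apply dichotomous_M].
Qed.

Lemma model_shapes k l m (p : model_type k l m) :
  isolated (model_code k l m) p (header_len k l m p) \/
  cantor_like (model_code k l m) p (header_len k l m p) \/
  baire_like (model_code k l m) p (header_len k l m p).
Proof.
  destruct p as [a|[[a x]|[a y]]].
  - left. intros y y' H1 H2. apply header_K in H1. apply header_K in H2. congruence.
  - right; left. set (h := header_len k l m (inr (inl (a, x)))).
    assert (P : forall x0 j, model_code k l m (inr (inl (a, x0))) (h + j) = bit (x0 j))
      by (intros; apply payload_L).
    split.
    + intros y n Hn Hy j [q [Hq Hj]]. subst j.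
      destruct (header_L k l m a x q (cyl_trans _ _ _ _ _ _ (le_n _) Hy (cyl_le _ _ _ _ _ Hn Hq)))
        as [x' E]. subst q.
      replace n with (h + (n - h)) by lia. rewrite P. destruct (x' _); simpl; lia.
    + intros y n Hn Hy. destruct (header_L k l m a x y Hy) as [x1 E]. subst y.
      assert (Child : forall b, has_child (model_code k l m) (inr (inl (a, x1))) n (bit b)).
      { intros b. exists (inr (inl (a, update x1 (n - h) b))). split.
        - apply (cyl_le _ _ (h + (n - h))); [lia|]. apply agree_L, update_agree.
        - replace n with (h + (n - h)) at 2 by lia. rewrite P, update_at. reflexivity. }
      exists (inr (inl (a, x1))), n. repeat split; auto using cyl_refl.
      * apply (Child false).
      * apply (Child true).
  - right; right. set (h := header_len k l m (inr (inr (a, y)))).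
    assert (P : forall y0 j, model_code k l m (inr (inr (a, y0))) (h + j) = y0 j)
      by (intros; apply payload_M).
    intros y0 n Hn Hy. destruct (header_M k l m a y y0 Hy) as [y1 E]. subst y0.
    exists (inr (inr (a, y1))), n. repeat split; auto using cyl_refl.
    intros j. exists (inr (inr (a, update y1 (n - h) j))). split.
    + apply (cyl_le _ _ (h + (n - h))); [lia|]. apply agree_M, update_agree.
    + replace n with (h + (n - h)) at 2 by lia. rewrite P. apply update_at.
Qed.

Lemma model_open_iff k l m (U : model_type k l m -> Prop) :
  model_open k l m U <-> cyl_open (model_code k l m) U.
Proof.
  split.
  - intros [_ [HL HM]] p Hp. destruct p as [a|[[a x]|[a y]]].
    + exists (header_len k l m (inl a)). intros q Hq. apply header_K in Hq. subst; auto.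
    + destruct (HL (a, x) Hp) as [V [W [HV [HW [Va [Wx Hbox]]]]]].
      destruct (proj1 (discrete_power_open_iff W) HW x Wx) as [K HK].
      set (h := header_len k l m (inr (inl (a, x)))).
      exists (h + K). intros q Hq.
      destruct (header_L k l m a x q (cyl_le _ _ (h + K) h _ ltac:(lia) Hq)) as [x' E]. subst q.
      apply (Hbox a x'); auto. apply HK. apply (agree_L k l m a x x' K). exact Hq.
    + destruct (HM (a, y) Hp) as [V [W [HV [HW [Va [Wy Hbox]]]]]].
      destruct (proj1 (discrete_power_open_iff W) HW y Wy) as [K HK].
      set (h := header_len k l m (inr (inr (a, y)))).
      exists (h + K). intros q Hq.
      destruct (header_M k l m a y q (cyl_le _ _ (h + K) h _ ltac:(lia) Hq)) as [y' E]. subst q.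
      apply (Hbox a y'); auto. apply HK. apply (agree_M k l m a y y' K). exact Hq.
  - intros H. split; [exact I|]. split.
    + intros [a x] Hp. destruct (H _ Hp) as [N HN].
      exists (fun a' => a' = a), (fun x' => agree N x' x). repeat split; auto using agree_refl.
      * apply discrete_power_open_iff. intros x'' Hx''. exists N. intros y Hy. eapply agree_trans; eauto.
      * intros a' x' E Hx'. subst a'. apply HN.
        apply (cyl_le _ _ (header_len k l m (inr (inl (a, x))) + N)); [lia|]. apply agree_L, Hx'.
    + intros [a y] Hp. destruct (H _ Hp) as [N HN].
      exists (fun a' => a' = a), (fun y' => agree N y' y). repeat split; auto using agree_refl.
      * apply discrete_power_open_iff. intros y'' Hy''. exists N. intros y0 Hy. eapply agree_trans; eauto.
      * intros a' y' E Hy'. subst a'. apply HN.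
        apply (cyl_le _ _ (header_len k l m (inr (inr (a, y))) + N)); [lia|]. apply agree_M, Hy'.
Qed.

Definition equipotent (A B : Type) : Prop := exists (f : A -> B) (g : B -> A),
  (forall a, g (f a) = a) /\ (forall b, f (g b) = b).

Lemma equipotent_trans A B C : equipotent A B -> equipotent B C -> equipotent A C.
Proof.
  intros [f1 [g1 [H1 H2]]] [f2 [g2 [K1 K2]]]. exists (fun a => f2 (f1 a)), (fun c => g1 (g2 c)).
  split; intros; [rewrite K1, H1|rewrite H2, K2]; auto.
Qed.

Lemma sig_eq {A : Type} (S : A -> Prop) (s s' : {a | S a}) : proj1_sig s = proj1_sig s' -> s = s'.
Proof. intros H. apply eq_sig_hprop; auto. intros; apply proof_irrelevance. Qed.

Lemma image_equipotent {A B : Type} (f : A -> B) (S : A -> Prop) :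
  (forall a b, S a -> S b -> f a = f b -> a = b) ->
  equipotent {a | S a} {b | exists a, S a /\ f a = b}.
Proof.
  intros Hf.
  assert (Hpre : forall t : {b | exists a, S a /\ f a = b}, exists a, S a /\ f a = proj1_sig t)
    by (intros [b Hb]; exact Hb).
  set (pre := fun t => constructive_indefinite_description _ (Hpre t)).
  exists (fun s => exist _ (f (proj1_sig s)) (ex_intro _ (proj1_sig s) (conj (proj2_sig s) eq_refl))).
  exists (fun t => exist S (proj1_sig (pre t)) (proj1 (proj2_sig (pre t)))).
  split.
  - intros [a Ha]. apply sig_eq. simpl. destruct (pre _) as [a' [Ha' E]]. simpl. apply Hf; auto.
  - intros t. apply sig_eq. simpl. destruct (pre t) as [a' [Ha' E]]. auto.
Qed.

Section Rank.
Variable T : nat -> Prop.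
Fixpoint rank (n : nat) : nat :=
  match n with
  | 0 => 0
  | S n => rank n + if excluded_middle_informative (T n) then 1 else 0
  end.

Lemma rank_mono a b : a <= b -> rank a <= rank b.
Proof. induction 1; simpl; auto. lia. Qed.
Lemma rank_succ n : T n -> rank (S n) = S (rank n).
Proof. intros H. simpl. destruct excluded_middle_informative; [lia|contradiction]. Qed.
Lemma rank_inj a b : T a -> T b -> rank a = rank b -> a = b.
Proof.
  intros Ha Hb E. destruct (lt_eq_lt_dec a b) as [[H|H]|H]; auto.
  - pose proof (rank_mono (S a) b H). rewrite rank_succ in H0 by auto. lia.
  - pose proof (rank_mono (S b) a H). rewrite rank_succ in H0 by auto. lia.
Qed.
Lemma rank_downward B : forall r, r < rank B -> exists n, T n /\ rank n = r.
Proof.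
  induction B; simpl; intros r Hr. lia.
  destruct excluded_middle_informative as [HT|HT].
  - destruct (Nat.eq_dec r (rank B)); [subst; eauto|]. apply IHB. lia.
  - apply IHB. lia.
Qed.
End Rank.

Lemma downward_equipotent (R : nat -> Prop) : (forall r r', r' <= r -> R r -> R r') ->
  exists c, equipotent {r | R r} (card_type c).
Proof.
  intros Hdown. destruct (classic (exists r, ~ R r)) as [[r Hr]|Hall].
  - destruct (ex_least (fun r => ~ R r) r Hr) as [c [Hc Hmin]].
    assert (Hiff : forall r, R r <-> r < c).
    { intros r'. split; intros H.
      - destruct (le_lt_dec c r'); auto. exfalso. apply Hc. apply (Hdown r'); auto.
      - apply NNPP. intro. apply (Hmin r'); auto. }
    exists (Some c). simpl.
    exists (fun s => exist _ (proj1_sig s) (proj1 (Hiff _) (proj2_sig s))),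
           (fun s => exist _ (proj1_sig s) (proj2 (Hiff _) (proj2_sig s))).
    split; intros; apply sig_eq; reflexivity.
  - assert (HR : forall r, R r) by (intros r; apply NNPP; intro; apply Hall; eauto).
    exists None. simpl. exists (@proj1_sig _ _), (fun r => exist _ r (HR r)).
    split; [intros; apply sig_eq|]; reflexivity.
Qed.

Lemma countable_subset_cardinal {A : Type} (iota : A -> nat)
  (Hi : forall a b, iota a = iota b -> a = b) (S : A -> Prop) :
  exists c, equipotent {a | S a} (card_type c).
Proof.
  set (T := fun n => exists a, S a /\ iota a = n).
  destruct (downward_equipotent (fun r => exists n, T n /\ rank T n = r)) as [c Hc].
  { intros r r' Hr' [n [Tn E]]. destruct (Nat.eq_dec r' r); [subst; eauto|].
    apply (rank_downward T n). lia. }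
  exists c. eapply equipotent_trans; [apply (image_equipotent iota S); auto|].
  eapply equipotent_trans; [|exact Hc]. apply image_equipotent. apply rank_inj.
Qed.

Fixpoint list_code (s : list nat) : nat :=
  match s with [] => 0 | a :: s => S (Cantor.to_nat (a, list_code s)) end.
Lemma list_code_inj s t : list_code s = list_code t -> s = t.
Proof.
  revert t; induction s as [|a s IH]; intros [|b t]; intros H; try discriminate; auto.
  assert (E : Cantor.to_nat (a, list_code s) = Cantor.to_nat (b, list_code t)) by exact (f_equal pred H).
  apply Cantor.to_nat_inj in E. injection E as H1 H2. subst. f_equal. auto.
Qed.

Lemma cyl_continuous {X Y : Type} (eX : X -> nat -> nat) (eY : Y -> nat -> nat) (f : X -> Y) :
  (forall x N, exists N', forall y, cyl eX x N' y -> agree N (eY (f y)) (eY (f x))) ->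
  forall V, cyl_open eY V -> cyl_open eX (fun x => V (f x)).
Proof.
  intros Hc V HV x Hx. destruct (HV (f x) Hx) as [N HN]. destruct (Hc x N) as [N' HN'].
  exists N'. intros y Hy. apply HN. apply HN'. auto.
Qed.

(* Each point x has a least level at which
   its cylinder is isolated, Cantor-like or Baire-like; these least cylinders
   ("pieces", named by their code prefix) partition the space, and pieces of
   each kind are countably many.  Sending an isolated piece to a point of κ,
   and a Cantor-like (Baire-like) piece to a copy of 2^ω (ω^ω) through its
   parametrization, gives a homeomorphism with a model space. *)
Section Classification.
Variable X : Type.
Variable op : opens X.
Variable enc : X -> nat -> nat.
Hypothesis op_iff : forall U, op U <-> cyl_open enc U.
Hypothesis enc_inj : code_injective enc.
Hypothesis enc_closed : code_closed enc.
Hypothesis enc_dich : dichotomous enc.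

Hypothesis shaped_everywhere : forall x, exists n, shaped enc x n.

Lemma least_level_exists x : exists n, shaped enc x n /\ forall p, p < n -> ~ shaped enc x p.
Proof. destruct (shaped_everywhere x) as [n Hn]. apply (ex_least _ n Hn). Qed.
Definition level (x : X) : nat := proj1_sig (constructive_indefinite_description _ (least_level_exists x)).
Lemma level_shaped x : shaped enc x (level x).
Proof. unfold level. destruct (constructive_indefinite_description _ _) as [n [H1 H2]]; auto. Qed.
Lemma level_least x p : p < level x -> ~ shaped enc x p.
Proof. unfold level. destruct (constructive_indefinite_description _ _) as [n [H1 H2]]; auto. Qed.

Lemma level_eq x y : cyl enc x (level x) y -> level y = level x.
Proof.
  intros H. destruct (lt_eq_lt_dec (level y) (level x)) as [[L|L]|L]; auto.
  - exfalso. apply (level_least x (level y) L). apply (shaped_sub enc y); [apply level_shaped|].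
    apply cyl_sym. eapply cyl_le; [|exact H]. lia.
  - exfalso. apply (level_least y (level x) L). eapply shaped_sub; [apply level_shaped|exact H].
Qed.

Definition piece (x : X) : list nat := map (enc x) (seq 0 (level x)).

Lemma piece_eq x y : cyl enc x (level x) y -> piece y = piece x.
Proof.
  intros H. unfold piece. rewrite (level_eq x y H). apply map_ext_in.
  intros i Hi. apply in_seq in Hi. apply H. lia.
Qed.
Lemma piece_cyl x y : piece x = piece y -> cyl enc x (level x) y.
Proof.
  intros H. assert (E : level x = level y).
  { apply (f_equal (@length nat)) in H. unfold piece in H. rewrite !length_map, !length_seq in H. auto. }
  intros i Hi. assert (Hn : nth i (piece y) 0 = nth i (piece x) 0) by congruence.
  unfold piece in Hn. rewrite <- E in Hn.
  rewrite (nth_indep _ 0 (enc y 0)), (nth_indep (map (enc x) _) 0 (enc x 0)) in Hn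
    by (rewrite length_map, length_seq; lia).
  rewrite !map_nth, !seq_nth in Hn by lia. exact Hn.
Qed.

Definition kind (x : X) : nat :=
  if excluded_middle_informative (isolated enc x (level x)) then 0 else
  if excluded_middle_informative (cantor_like enc x (level x)) then 1 else 2.

Lemma kind_eq x y : cyl enc x (level x) y -> kind y = kind x.
Proof.
  intros H. assert (Hs := cyl_sym _ _ _ _ H). unfold kind. rewrite (level_eq x y H).
  destruct (excluded_middle_informative (isolated enc x (level x))) as [A|A];
  destruct (excluded_middle_informative (isolated enc y (level x))) as [B|B];
    [auto|exfalso; apply B; eapply isolated_sub; eauto|exfalso; apply A; eapply isolated_sub; eauto|].
  destruct (excluded_middle_informative (cantor_like enc x (level x))) as [C|C];
  destruct (excluded_middle_informative (cantor_like enc y (level x))) as [D|D]; auto.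
  - exfalso. apply D. eapply cantor_like_sub; eauto.
  - exfalso. apply C. eapply cantor_like_sub; eauto.
Qed.
Lemma kind_cases x : kind x = 0 \/ kind x = 1 \/ kind x = 2.
Proof. unfold kind. repeat destruct excluded_middle_informative; auto. Qed.
Lemma kind_0 x : kind x = 0 -> isolated enc x (level x).
Proof. unfold kind. repeat destruct excluded_middle_informative; auto; discriminate. Qed.
Lemma kind_1 x : kind x = 1 -> cantor_like enc x (level x).
Proof. unfold kind. repeat destruct excluded_middle_informative; auto; discriminate. Qed.
Lemma kind_2 x : kind x = 2 -> baire_like enc x (level x).
Proof.
  unfold kind. repeat destruct excluded_middle_informative; try discriminate.
  intros _. destruct (level_shaped x) as [A|[A|A]]; tauto.
Qed.

Definition pieces (t : nat) : Type := {s : list nat | exists x, piece x = s /\ kind x = t}.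
Definition piece_at (x : X) t (h : kind x = t) : pieces t := exist _ (piece x) (ex_intro _ x (conj eq_refl h)).
Lemma piece_at_eq x t h (s : pieces t) : proj1_sig s = piece x -> piece_at x t h = s.
Proof. intros E. apply sig_eq. simpl. auto. Qed.
Definition rep {t} (s : pieces t) : X := proj1_sig (constructive_indefinite_description _ (proj2_sig s)).
Lemma rep_spec {t} (s : pieces t) : piece (rep s) = proj1_sig s /\ kind (rep s) = t.
Proof. unfold rep. destruct (constructive_indefinite_description _ _) as [x Hx]; auto. Qed.
Lemma rep_cyl {t} (s : pieces t) x : proj1_sig s = piece x -> cyl enc (rep s) (level (rep s)) x.
Proof. intros E. apply piece_cyl. rewrite (proj1 (rep_spec s)). auto. Qed.

Lemma cantor_piece_param (s : pieces 1) : exists FG : (X -> nat -> bool) * ((nat -> bool) -> X),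
  parametrizes enc (rep s) (level (rep s)) (fst FG) (snd FG).
Proof.
  destruct (cantor_cylinder X enc enc_closed enc_inj (rep s) (level (rep s))) as [F [G H]].
  - apply kind_1, rep_spec.
  - exists (F, G). exact H.
Qed.
Lemma baire_piece_param (s : pieces 2) : exists FG : (X -> nat -> nat) * ((nat -> nat) -> X),
  parametrizes enc (rep s) (level (rep s)) (fst FG) (snd FG).
Proof.
  destruct (baire_cylinder X enc enc_closed enc_inj enc_dich (rep s) (level (rep s))) as [F [G H]].
  - apply kind_2, rep_spec.
  - exists (F, G). exact H.
Qed.
Definition cparam s := proj1_sig (constructive_indefinite_description _ (cantor_piece_param s)).
Definition bparam s := proj1_sig (constructive_indefinite_description _ (baire_piece_param s)).
Lemma cparam_spec s : parametrizes enc (rep s) (level (rep s)) (fst (cparam s)) (snd (cparam s)).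
Proof. unfold cparam. destruct (constructive_indefinite_description _ _); auto. Qed.
Lemma bparam_spec s : parametrizes enc (rep s) (level (rep s)) (fst (bparam s)) (snd (bparam s)).
Proof. unfold bparam. destruct (constructive_indefinite_description _ _); auto. Qed.

Section ToModel.
Variables kappa lambda mu : option nat.
Variable num0 : pieces 0 -> card_type kappa.
Variable enum0 : card_type kappa -> pieces 0.
Hypothesis enum_num0 : forall s, enum0 (num0 s) = s.
Hypothesis num_enum0 : forall a, num0 (enum0 a) = a.
Variable num1 : pieces 1 -> card_type lambda.
Variable enum1 : card_type lambda -> pieces 1.
Hypothesis enum_num1 : forall s, enum1 (num1 s) = s.
Hypothesis num_enum1 : forall a, num1 (enum1 a) = a.
Variable num2 : pieces 2 -> card_type mu.
Variable enum2 : card_type mu -> pieces 2.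
Hypothesis enum_num2 : forall s, enum2 (num2 s) = s.
Hypothesis num_enum2 : forall a, num2 (enum2 a) = a.
Notation mcode := (model_code kappa lambda mu).

Lemma kind_other x : kind x <> 0 -> kind x <> 1 -> kind x = 2.
Proof. destruct (kind_cases x) as [|[|]]; tauto. Qed.

Definition to_model (x : X) : model_type kappa lambda mu :=
  match Nat.eq_dec (kind x) 0 with
  | left h => inl (num0 (piece_at x 0 h))
  | right h0 => match Nat.eq_dec (kind x) 1 with
     | left h => let s := piece_at x 1 h in inr (inl (num1 s, fst (cparam s) x))
     | right h1 => let s := piece_at x 2 (kind_other x h0 h1) in inr (inr (num2 s, fst (bparam s) x))
     end
  end.

Definition of_model (p : model_type kappa lambda mu) : X :=
  match p with
  | inl a => rep (enum0 a)
  | inr (inl (a, z)) => snd (cparam (enum1 a)) z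
  | inr (inr (a, z)) => snd (bparam (enum2 a)) z
  end.

Lemma to_model_0 x (s : pieces 0) : proj1_sig s = piece x -> kind x = 0 -> to_model x = inl (num0 s).
Proof.
  intros E T. unfold to_model. destruct (Nat.eq_dec (kind x) 0) as [h|h]; [|contradiction].
  rewrite (piece_at_eq x 0 h s E). reflexivity.
Qed.
Lemma to_model_1 x (s : pieces 1) : proj1_sig s = piece x -> kind x = 1 ->
  to_model x = inr (inl (num1 s, fst (cparam s) x)).
Proof.
  intros E T. unfold to_model. destruct (Nat.eq_dec (kind x) 0) as [h|h]; [congruence|].
  destruct (Nat.eq_dec (kind x) 1) as [h'|h']; [|contradiction].
  cbv zeta. rewrite (piece_at_eq x 1 h' s E). reflexivity.
Qed.
Lemma to_model_2 x (s : pieces 2) : proj1_sig s = piece x -> kind x = 2 ->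
  to_model x = inr (inr (num2 s, fst (bparam s) x)).
Proof.
  intros E T. unfold to_model. destruct (Nat.eq_dec (kind x) 0) as [h|h]; [congruence|].
  destruct (Nat.eq_dec (kind x) 1) as [h'|h']; [congruence|].
  cbv zeta. rewrite (piece_at_eq x 2 _ s E). reflexivity.
Qed.

Lemma of_to_model x : of_model (to_model x) = x.
Proof.
  destruct (kind_cases x) as [T|[T|T]].
  - rewrite (to_model_0 x (piece_at x 0 T) eq_refl T). simpl. rewrite enum_num0.
    destruct (rep_spec (piece_at x 0 T)) as [A B]. apply (kind_0 _ B).
    + apply cyl_refl.
    + apply rep_cyl. reflexivity.
  - rewrite (to_model_1 x (piece_at x 1 T) eq_refl T). simpl. rewrite enum_num1.
    apply (cparam_spec _). apply rep_cyl. reflexivity.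
  - rewrite (to_model_2 x (piece_at x 2 T) eq_refl T). simpl. rewrite enum_num2.
    apply (bparam_spec _). apply rep_cyl. reflexivity.
Qed.

Lemma to_of_model p : to_model (of_model p) = p.
Proof.
  destruct p as [a|[[a z]|[a z]]]; simpl.
  - destruct (rep_spec (enum0 a)) as [A B]. rewrite (to_model_0 _ (enum0 a) (eq_sym A) B), num_enum0. auto.
  - destruct (rep_spec (enum1 a)) as [A B]. destruct (cparam_spec (enum1 a)) as [H1 [H2 _]].
    assert (Hy := H1 z). set (y := snd (cparam (enum1 a)) z) in *.
    rewrite (to_model_1 y (enum1 a)), num_enum1.
    + do 3 f_equal. apply functional_extensionality. intros; apply H2.
    + rewrite (piece_eq _ _ Hy). auto.
    + rewrite (kind_eq _ _ Hy). auto.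
  - destruct (rep_spec (enum2 a)) as [A B]. destruct (bparam_spec (enum2 a)) as [H1 [H2 _]].
    assert (Hy := H1 z). set (y := snd (bparam (enum2 a)) z) in *.
    rewrite (to_model_2 y (enum2 a)), num_enum2.
    + do 3 f_equal. apply functional_extensionality. intros; apply H2.
    + rewrite (piece_eq _ _ Hy). auto.
    + rewrite (kind_eq _ _ Hy). auto.
Qed.

Lemma to_model_continuous x N :
  exists N', forall y, cyl enc x N' y -> agree N (mcode (to_model y)) (mcode (to_model x)).
Proof.
  destruct (kind_cases x) as [T|[T|T]].
  - exists (level x). intros y Hy. rewrite (to_model_0 x (piece_at x 0 T) eq_refl T).
    rewrite (to_model_0 y (piece_at x 0 T)); [apply agree_refl| |].
    + simpl. symmetry; apply piece_eq; auto.
    + rewrite (kind_eq _ _ Hy); auto.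
  - set (s := piece_at x 1 T). destruct (cparam_spec s) as [_ [_ [_ [_ Hc]]]].
    destruct (Hc x (rep_cyl s x eq_refl) N) as [NF HNF].
    exists (level x + NF). intros y Hy.
    assert (Hy1 : cyl enc x (level x) y) by (eapply cyl_le; [|exact Hy]; lia).
    rewrite (to_model_1 x s eq_refl T), (to_model_1 y s).
    + eapply cyl_le; [|apply (proj2 (agree_L _ _ _ (num1 s) _ _ N))]; [lia|].
      apply HNF. eapply cyl_le; [|exact Hy]; lia.
    + simpl. symmetry; apply piece_eq; auto.
    + rewrite (kind_eq _ _ Hy1); auto.
  - set (s := piece_at x 2 T). destruct (bparam_spec s) as [_ [_ [_ [_ Hc]]]].
    destruct (Hc x (rep_cyl s x eq_refl) N) as [NF HNF].
    exists (level x + NF). intros y Hy.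
    assert (Hy1 : cyl enc x (level x) y) by (eapply cyl_le; [|exact Hy]; lia).
    rewrite (to_model_2 x s eq_refl T), (to_model_2 y s).
    + eapply cyl_le; [|apply (proj2 (agree_M _ _ _ (num2 s) _ _ N))]; [lia|].
      apply HNF. eapply cyl_le; [|exact Hy]; lia.
    + simpl. symmetry; apply piece_eq; auto.
    + rewrite (kind_eq _ _ Hy1); auto.
Qed.

Lemma of_model_continuous p N :
  exists N', forall q, cyl mcode p N' q -> agree N (enc (of_model q)) (enc (of_model p)).
Proof.
  destruct p as [a|[[a z]|[a z]]].
  - exists (header_len kappa lambda mu (inl a)). intros q Hq. apply header_K in Hq. subst. apply agree_refl.
  - set (h := header_len kappa lambda mu (inr (inl (a, z)))). exists (h + N). intros q Hq.
    destruct (header_L _ _ _ a z q (cyl_le _ _ (h + N) h _ ltac:(lia) Hq)) as [z' E]. subst q.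
    simpl. destruct (cparam_spec (enum1 a)) as [_ [_ [_ [Hc _]]]]. apply Hc.
    apply (proj1 (agree_L kappa lambda mu a z z' N)). exact Hq.
  - set (h := header_len kappa lambda mu (inr (inr (a, z)))). exists (h + N). intros q Hq.
    destruct (header_M _ _ _ a z q (cyl_le _ _ (h + N) h _ ltac:(lia) Hq)) as [z' E]. subst q.
    simpl. destruct (bparam_spec (enum2 a)) as [_ [_ [_ [Hc _]]]]. apply Hc.
    apply (proj1 (agree_M kappa lambda mu a z z' N)). exact Hq.
Qed.

Lemma homeomorphic_model : homeomorphic op (model_open kappa lambda mu).
Proof.
  exists to_model, of_model. split; [apply of_to_model|]. split; [apply to_of_model|]. split.
  - intros V HV. apply op_iff. apply model_open_iff in HV.
    apply (cyl_continuous enc mcode to_model); auto. apply to_model_continuous.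
  - intros U HU. apply model_open_iff. apply op_iff in HU.
    apply (cyl_continuous mcode enc of_model); auto. apply of_model_continuous.
Qed.
End ToModel.

Theorem classification : in_C op.
Proof.
  destruct (countable_subset_cardinal list_code list_code_inj (fun s => exists x, piece x = s /\ kind x = 0))
    as [c0 [num0 [enum0 [H0 H0']]]].
  destruct (countable_subset_cardinal list_code list_code_inj (fun s => exists x, piece x = s /\ kind x = 1))
    as [c1 [num1 [enum1 [H1 H1']]]].
  destruct (countable_subset_cardinal list_code list_code_inj (fun s => exists x, piece x = s /\ kind x = 2))
    as [c2 [num2 [enum2 [H2 H2']]]].
  exists c0, c1, c2. eapply homeomorphic_model; eauto.
Qed.
End Classification.

(* Interleaving: digit j of coordinate c goes to position [slot c j] of the
   product code, via Cantor's pairing. *)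
Definition slot (c j : nat) : nat := Cantor.to_nat (c, j).
Lemma slot_of c j : Cantor.of_nat (slot c j) = (c, j).
Proof. apply Cantor.cancel_of_to. Qed.
Lemma slot_ge c j : c + j <= slot c j.
Proof. unfold slot. pose proof (Cantor.to_nat_non_decreasing c j). lia. Qed.
Lemma slot_lt c j j' : j < j' -> slot c j < slot c j'.
Proof.
  assert (HS : forall j, slot c j < slot c (S j)).
  { intros j0. unfold slot. pose proof (Cantor.to_nat_spec c j0). pose proof (Cantor.to_nat_spec c (S j0)). nia. }
  induction 1; [apply HS|]. pose proof (HS m). lia.
Qed.
Lemma slot_lt_iff c j j' : slot c j < slot c j' <-> j < j'.
Proof.
  split; [|apply slot_lt]. intros H. destruct (lt_eq_lt_dec j j') as [[A|A]|A]; auto.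
  subst; lia. pose proof (slot_lt c _ _ A). lia.
Qed.
Lemma slot_of_nat p : slot (fst (Cantor.of_nat p)) (snd (Cantor.of_nat p)) = p.
Proof. unfold slot. rewrite <- surjective_pairing. apply Cantor.cancel_to_of. Qed.

Lemma list_bound {A : Type} (F : list A) (h : A -> nat) : exists N, forall i, In i F -> h i <= N.
Proof.
  induction F as [|a F IH]. exists 0; simpl; tauto.
  destruct IH as [N HN]. exists (max N (h a)). intros i [E|Hi]. subst; lia. pose proof (HN i Hi); lia.
Qed.

Section ProductCode.
Variable I : Type.
Variable f : I -> nat.
Hypothesis f_inj : forall i j, f i = f j -> i = j.
Variables kk ll mm : I -> option nat.
Definition factor (i : I) : Type := model_type (kk i) (ll i) (mm i).
Definition fcode (i : I) : factor i -> nat -> nat := model_code (kk i) (ll i) (mm i).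
Definition product : Type := forall i, factor i.
Definition product_open : opens product := prod_open factor (fun i => model_open (kk i) (ll i) (mm i)).

Definition coord_of (c : nat) : option I :=
  match excluded_middle_informative (exists i, f i = c) with
  | left h => Some (proj1_sig (constructive_indefinite_description _ h))
  | right _ => None end.
Lemma coord_of_f i : coord_of (f i) = Some i.
Proof.
  unfold coord_of. destruct excluded_middle_informative as [h|h].
  - f_equal. apply f_inj. exact (proj2_sig (constructive_indefinite_description _ h)).
  - exfalso; apply h; eauto.
Qed.
Lemma coord_of_Some c i : coord_of c = Some i -> f i = c.
Proof.
  unfold coord_of. destruct excluded_middle_informative as [h|h]; [|discriminate].
  intros E. injection E as E. subst. exact (proj2_sig (constructive_indefinite_description _ h)).
Qed.
Lemma coord_of_slot p i : coord_of (fst (Cantor.of_nat p)) = Some i -> p = slot (f i) (snd (Cantor.of_nat p)).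
Proof. intros E. apply coord_of_Some in E. rewrite E. symmetry. apply slot_of_nat. Qed.

Definition prod_code (x : product) (p : nat) : nat :=
  match coord_of (fst (Cantor.of_nat p)) with
  | Some i => fcode i (x i) (snd (Cantor.of_nat p))
  | None => 0 end.
Lemma prod_code_slot x i j : prod_code x (slot (f i) j) = fcode i (x i) j.
Proof. unfold prod_code. rewrite slot_of. simpl. rewrite coord_of_f. auto. Qed.

Lemma cyl_coord x N y i j : cyl prod_code x N y -> slot (f i) j < N -> fcode i (y i) j = fcode i (x i) j.
Proof. intros H Hj. rewrite <- !prod_code_slot. apply H; auto. Qed.

Definition set_coord (x : product) (i : I) (v : factor i) : product := fun i' =>
  match excluded_middle_informative (i = i') with
  | left e => eq_rect i factor v i' e
  | right _ => x i' end.
Lemma set_coord_same x i v : set_coord x i v i = v.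
Proof.
  unfold set_coord. destruct excluded_middle_informative as [e|e]; [|tauto].
  rewrite (proof_irrelevance _ e eq_refl). reflexivity.
Qed.
Lemma set_coord_other x i v i' : i <> i' -> set_coord x i v i' = x i'.
Proof. unfold set_coord. destruct excluded_middle_informative; tauto. Qed.

Lemma set_coord_cyl x n i w : (forall j, slot (f i) j < n -> fcode i w j = fcode i (x i) j) ->
  cyl prod_code x n (set_coord x i w).
Proof.
  intros H p Hp. unfold prod_code. destruct (coord_of (fst (Cantor.of_nat p))) as [i'|] eqn:E; auto.
  destruct (excluded_middle_informative (i = i')) as [e|e].
  - subst i'. rewrite set_coord_same. apply H. rewrite <- (coord_of_slot p i E). auto.
  - rewrite set_coord_other; auto.
Qed.

Lemma prod_children x n j :
  has_child prod_code x n j <->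
  match coord_of (fst (Cantor.of_nat n)) with
  | Some i => has_child (fcode i) (x i) (snd (Cantor.of_nat n)) j
  | None => j = 0 end.
Proof.
  destruct (coord_of (fst (Cantor.of_nat n))) as [i|] eqn:E.
  - assert (En := coord_of_slot n i E). split.
    + intros [y [Hy Hj]]. exists (y i). split.
      * intros j' Hj'. apply (cyl_coord x n y i j' Hy). rewrite En. apply slot_lt; auto.
      * rewrite <- Hj. rewrite En at 2. rewrite prod_code_slot. auto.
    + intros [w [Hw Hj]]. exists (set_coord x i w). split.
      * apply set_coord_cyl. intros j' Hj'. apply Hw. rewrite En in Hj'. apply slot_lt_iff in Hj'. auto.
      * rewrite En, prod_code_slot, set_coord_same. auto.
  - split.
    + intros [y [Hy Hj]]. unfold prod_code in Hj. rewrite E in Hj. auto.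
    + intros H. exists x. split; [apply cyl_refl|]. unfold prod_code. rewrite E. auto.
Qed.

Lemma prod_dichotomous : dichotomous prod_code.
Proof.
  intros x n. destruct (coord_of (fst (Cantor.of_nat n))) as [i|] eqn:E.
  - destruct (model_dichotomous (kk i) (ll i) (mm i) (x i) (snd (Cantor.of_nat n))) as [A|A].
    + left. intros j Hj. apply prod_children in Hj. rewrite E in Hj. apply A. exact Hj.
    + right. intros j. apply prod_children. rewrite E. apply A.
  - left. intros j Hj. apply prod_children in Hj. rewrite E in Hj. lia.
Qed.

Lemma prod_code_injective : code_injective prod_code.
Proof.
  intros x y H. apply functional_extensionality_dep. intros i.
  apply (model_code_injective (kk i) (ll i) (mm i)). intros j.
  change (fcode i (x i) j = fcode i (y i) j). rewrite <- !prod_code_slot. apply H.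
Qed.

Lemma prod_code_closed : code_closed prod_code.
Proof.
  intros g Hg.
  assert (Hex : forall i, exists v : factor i, forall j, fcode i v j = g (slot (f i) j)).
  { intros i. apply (model_code_closed (kk i) (ll i) (mm i)). intros n.
    destruct (Hg (slot (f i) n)) as [x Hx]. exists (x i). intros j Hj.
    change (fcode i (x i) j = g (slot (f i) j)). rewrite <- prod_code_slot. apply Hx. apply slot_lt; auto. }
  exists (fun i => proj1_sig (constructive_indefinite_description _ (Hex i))).
  intros p. unfold prod_code at 1. destruct (coord_of (fst (Cantor.of_nat p))) as [i|] eqn:E.
  - destruct (constructive_indefinite_description _ (Hex i)) as [v Hv]. simpl. rewrite Hv.
    rewrite <- (coord_of_slot p i E). auto.
  - destruct (Hg (S p)) as [x Hx]. rewrite <- (Hx p) by lia. unfold prod_code. rewrite E. auto.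
Qed.

(* The product code describes the product topology: a basic box depends on
   finitely many coordinates, each up to finite depth. *)
Lemma prod_open_iff U : product_open U <-> cyl_open prod_code U.
Proof.
  split.
  - intros H x Hx. destruct (H x Hx) as [F [V [HV [Vx Hbox]]]].
    assert (HN : forall i, exists Ni, In i F -> forall v, cyl (fcode i) (x i) Ni v -> V i v).
    { intros i. destruct (classic (In i F)) as [Hi|Hi]; [|exists 0; tauto].
      destruct (proj1 (model_open_iff (kk i) (ll i) (mm i) (V i)) (HV i Hi) (x i) (Vx i Hi)) as [Ni HNi].
      eauto. }
    set (depth := fun i => proj1_sig (constructive_indefinite_description _ (HN i))).
    destruct (list_bound F (fun i => slot (f i) (depth i))) as [N HB].
    exists N. intros y Hy. apply Hbox. intros i Hi.
    apply (proj2_sig (constructive_indefinite_description _ (HN i)) Hi).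
    intros j Hj. apply (cyl_coord x N y i j Hy). specialize (HB i Hi).
    pose proof (slot_lt (f i) j _ Hj). simpl in HB. unfold depth in HB. lia.
  - intros H x Hx. destruct (H x Hx) as [N HN].
    exists (flat_map (fun c => match coord_of c with Some i => [i] | None => [] end) (seq 0 N)).
    exists (fun i v => forall j, j < N -> fcode i v j = fcode i (x i) j).
    split; [|split].
    + intros i _. apply model_open_iff. intros v Hv. exists N. intros w Hw j Hj.
      unfold fcode in *. rewrite Hw by auto. auto.
    + intros i j Hj. auto.
    + intros y Hy. apply HN. intros p Hp. unfold prod_code.
      pose proof (slot_ge (fst (Cantor.of_nat p)) (snd (Cantor.of_nat p))) as Hs. rewrite slot_of_nat in Hs.
      destruct (coord_of (fst (Cantor.of_nat p))) as [i|] eqn:E; auto.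
      apply Hy; [|lia]. apply in_flat_map. exists (fst (Cantor.of_nat p)).
      split; [apply in_seq; lia|]. rewrite E. simpl; auto.
Qed.

(* A factor is binary if its code tree branches only
   into {0,1} (μ = 0 and κ, λ finite), and a singleton if it has one point. *)
Definition binary_factor (i : I) : Prop := forall (v : factor i) n, binary (fcode i) v n.
Definition singleton_factor (i : I) : Prop := forall v v' : factor i, v = v'.

Lemma nonbinary_full i : ~ binary_factor i -> exists w nw, full (fcode i) w nw.
Proof.
  intros H. apply NNPP. intros H'. apply H. intros v n j Hj.
  destruct (model_dichotomous (kk i) (ll i) (mm i) v n) as [A|A]; [apply A; auto|].
  exfalso. apply H'. exists v, n. exact A.
Qed.

Lemma nonsingleton_split i : ~ singleton_factor i -> binary_factor i ->
  exists w nw, has_child (fcode i) w nw 0 /\ has_child (fcode i) w nw 1.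
Proof.
  intros Hns Hbin. apply NNPP. intros H. apply Hns. intros v v'. apply NNPP. intros Hne.
  assert (Hd : exists t, fcode i v t <> fcode i v' t).
  { apply NNPP. intros H2. apply Hne. apply (model_code_injective (kk i) (ll i) (mm i)).
    intros t. apply NNPP. intros H3. apply H2. eauto. }
  destruct Hd as [t Ht]. destruct (ex_least (fun t => fcode i v t <> fcode i v' t) t Ht) as [t0 [A B]].
  assert (Hc1 : has_child (fcode i) v t0 (fcode i v t0)) by (exists v; split; [apply cyl_refl|auto]).
  assert (Hc2 : has_child (fcode i) v t0 (fcode i v' t0)).
  { exists v'. split; auto. intros q Hq. apply NNPP. intros E. apply (B q Hq). auto. }
  pose proof (Hbin _ _ _ Hc1). pose proof (Hbin _ _ _ Hc2).
  apply H. exists v, t0.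
  destruct (fcode i v t0) as [|[|]], (fcode i v' t0) as [|[|]]; try lia; split; auto.
Qed.

Lemma lift_node y m i w nw : (forall j, slot (f i) j < m -> fcode i w j = fcode i (y i) j) ->
  m <= slot (f i) nw -> exists z m', m <= m' /\ cyl prod_code y m z /\
    forall j, has_child prod_code z m' j <-> has_child (fcode i) w nw j.
Proof.
  intros Hw Hm. exists (set_coord y i w), (slot (f i) nw). split; auto. split; [apply set_coord_cyl; auto|].
  intros j. rewrite prod_children, slot_of. simpl. rewrite coord_of_f, set_coord_same. tauto.
Qed.
Lemma lift_far y m i w nw : m <= f i -> exists z m', m <= m' /\ cyl prod_code y m z /\
    forall j, has_child prod_code z m' j <-> has_child (fcode i) w nw j.
Proof.
  intros Hm. apply lift_node; [|pose proof (slot_ge (f i) nw); lia].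
  intros j Hj. pose proof (slot_ge (f i) j). lia.
Qed.
Lemma lift_near y m i w nw : m <= nw -> cyl (fcode i) (y i) m w -> exists z m', m <= m' /\
    cyl prod_code y m z /\ forall j, has_child prod_code z m' j <-> has_child (fcode i) w nw j.
Proof.
  intros Hm Hw. apply lift_node; [|pose proof (slot_ge (f i) nw); lia].
  intros j Hj. apply Hw. pose proof (slot_ge (f i) j). lia.
Qed.

Lemma prod_baire_far x : (forall B, exists i, B <= f i /\ ~ binary_factor i) -> baire_like prod_code x 0.
Proof.
  intros Hinf y m _ _. destruct (Hinf m) as [i [Hi Hnb]]. destruct (nonbinary_full i Hnb) as [w [nw Hw]].
  destruct (lift_far y m i w nw Hi) as [z [m' [Z1 [Z2 Z3]]]].
  exists z, m'. repeat split; auto. intros j. apply Z3, Hw.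
Qed.

(* Finitely many coordinates, the "front" f i < B0, are examined up to the
   end of their headers, i.e. up to depth N of the product code. *)
Section Front.
Variable x : product.
Variable B0 : nat.
Definition front : list I := flat_map (fun c => match coord_of c with Some i => [i] | None => [] end) (seq 0 B0).
Lemma in_front i : f i < B0 -> In i front.
Proof. intros Hi. apply in_flat_map. exists (f i). split; [apply in_seq; lia|]. rewrite coord_of_f. simpl; auto. Qed.
Definition hd (i : I) : nat := header_len (kk i) (ll i) (mm i) (x i).

Variable N : nat.
Hypothesis N_front : forall i, In i front -> slot (f i) (hd i) <= N.

Lemma front_header y : cyl prod_code x N y -> forall i, In i front -> cyl (fcode i) (x i) (hd i) (y i).
Proof.
  intros Hy i Hi j Hj. apply (cyl_coord x N y i j Hy). pose proof (N_front i Hi).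
  pose proof (slot_lt (f i) j (hd i) Hj). lia.
Qed.

Lemma prod_baire_near i : In i front -> baire_like (fcode i) (x i) (hd i) -> baire_like prod_code x N.
Proof.
  intros Hi HB y m Hm Hy.
  destruct (HB (y i) (m + hd i) ltac:(lia) (front_header y Hy i Hi)) as [w [nw [W1 [W2 W3]]]].
  destruct (lift_near y m i w nw ltac:(lia) (cyl_le _ _ (m + hd i) m _ ltac:(lia) W2)) as [z [m' [Z1 [Z2 Z3]]]].
  exists z, m'. repeat split; auto. intros j. apply Z3, W3.
Qed.

Lemma prod_binary_below : (forall i, ~ binary_factor i -> f i < B0) ->
  (forall i, In i front -> isolated (fcode i) (x i) (hd i) \/ cantor_like (fcode i) (x i) (hd i)) ->
  forall y m, N <= m -> cyl prod_code x N y -> binary prod_code y m.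
Proof.
  intros Hnb Hfront y m j Hm Hy Hc. apply prod_children in Hc.
  destruct (coord_of (fst (Cantor.of_nat m))) as [i|] eqn:E; [|lia].
  destruct (classic (binary_factor i)) as [Hb|Hb]; [eapply Hb; eauto|].
  assert (Hi : In i front) by (apply in_front, Hnb, Hb).
  assert (Hdeep : hd i <= snd (Cantor.of_nat m)).
  { apply Nat.nlt_ge. intros Hlt. apply (slot_lt (f i)) in Hlt. rewrite <- (coord_of_slot m i E) in Hlt.
    pose proof (N_front i Hi). lia. }
  destruct (Hfront i Hi) as [A|[A _]].
  - eapply (isolated_binary _ (fcode i) (model_dichotomous _ _ _)); eauto. apply front_header; auto.
  - eapply A; eauto. apply front_header; auto.
Qed.

Lemma prod_split_near i : In i front -> cantor_like (fcode i) (x i) (hd i) ->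
  forall y m, N <= m -> cyl prod_code x N y -> exists z m', m <= m' /\ cyl prod_code y m z /\
    has_child prod_code z m' 0 /\ has_child prod_code z m' 1.
Proof.
  intros Hi [_ HK] y m Hm Hy.
  destruct (HK (y i) (m + hd i) ltac:(lia) (front_header y Hy i Hi)) as [w [nw [W1 [W2 [W3 W4]]]]].
  destruct (lift_near y m i w nw ltac:(lia) (cyl_le _ _ (m + hd i) m _ ltac:(lia) W2)) as [z [m' [Z1 [Z2 Z3]]]].
  exists z, m'. repeat split; auto; apply Z3; auto.
Qed.

Lemma prod_split_far : (forall i, ~ binary_factor i -> f i < B0) ->
  (forall B, exists i, B <= f i /\ ~ singleton_factor i) ->
  forall y m, exists z m', m <= m' /\ cyl prod_code y m z /\
    has_child prod_code z m' 0 /\ has_child prod_code z m' 1.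
Proof.
  intros Hnb Hinf y m. destruct (Hinf (max m B0)) as [i [Hi Hns]].
  assert (Hb : binary_factor i) by (apply NNPP; intros C; pose proof (Hnb i C); lia).
  destruct (nonsingleton_split i Hns Hb) as [w [nw [W0 W1]]].
  destruct (lift_far y m i w nw ltac:(lia)) as [z [m' [Z1 [Z2 Z3]]]].
  exists z, m'. repeat split; auto; apply Z3; auto.
Qed.

Lemma prod_isolated : (forall i, ~ singleton_factor i -> In i front) ->
  (forall i, In i front -> isolated (fcode i) (x i) (hd i)) -> isolated prod_code x N.
Proof.
  intros Hns Hiso y y' Hy Hy'. apply functional_extensionality_dep. intros i.
  destruct (classic (singleton_factor i)) as [S|S]; auto.
  apply (Hiso i (Hns i S)); apply front_header; auto.
Qed.
End Front.

Lemma prod_shaped_bounded x B0 : (forall i, ~ binary_factor i -> f i < B0) ->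
  (forall B, exists i, B <= f i /\ ~ singleton_factor i) \/ (forall i, ~ singleton_factor i -> f i < B0) ->
  exists n, shaped prod_code x n.
Proof.
  intros Hnb Hns. destruct (list_bound (front B0) (fun i => slot (f i) (hd x i))) as [N HN].
  exists N. unfold shaped.
  destruct (classic (exists i, In i (front B0) /\ baire_like (fcode i) (x i) (hd x i))) as [[i [Hi HB]]|HnoB].
  { right; right. eapply prod_baire_near; eauto. }
  assert (Hfront : forall i, In i (front B0) ->
            isolated (fcode i) (x i) (hd x i) \/ cantor_like (fcode i) (x i) (hd x i)).
  { intros i Hi. destruct (model_shapes (kk i) (ll i) (mm i) (x i)) as [A|[A|A]]; auto.
    exfalso; apply HnoB; eauto. }
  destruct (classic ((exists i, In i (front B0) /\ cantor_like (fcode i) (x i) (hd x i)) \/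
                     (forall B, exists i, B <= f i /\ ~ singleton_factor i))) as [HK|HK].
  - right; left. split; [eapply prod_binary_below; eauto|].
    destruct HK as [[i [Hi HKi]]|Hinf].
    + eapply prod_split_near; eauto.
    + intros y m _ _. eapply prod_split_far; eauto.
  - left. apply (prod_isolated x B0 N HN).
    + intros i Hi. apply in_front. destruct Hns as [A|A]; [exfalso; apply HK; right; exact A|auto].
    + intros i Hi. destruct (Hfront i Hi) as [A|A]; auto. exfalso. apply HK. left. eauto.
Qed.

(* Every point of the product has a shaped cylinder: if infinitely many
   factors are non-binary the product is Baire-like everywhere; otherwise a
   front containing the non-binary factors can be chosen as above. *)
Lemma prod_shaped x : exists n, shaped prod_code x n.
Proof.
  destruct (classic (forall B, exists i, B <= f i /\ ~ binary_factor i)) as [Hinf|Hfin].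
  { exists 0. right; right. apply prod_baire_far; auto. }
  assert (Hbound : forall (P : I -> Prop), ~ (forall B, exists i, B <= f i /\ P i) ->
            exists B, forall i, P i -> f i < B).
  { intros P HP. apply NNPP. intros H. apply HP. intros B. apply NNPP. intros H2. apply H.
    exists B. intros i Hi. apply Nat.nle_gt. intros Hle. apply H2. eauto. }
  destruct (Hbound _ Hfin) as [B HB].
  destruct (classic (forall B', exists i, B' <= f i /\ ~ singleton_factor i)) as [Hinf'|Hfin'].
  - apply (prod_shaped_bounded x B HB (or_introl Hinf')).
  - destruct (Hbound _ Hfin') as [B' HB'].
    apply (prod_shaped_bounded x (max B B')).
    + intros i Hi. pose proof (HB i Hi). lia.
    + right. intros i Hi. pose proof (HB' i Hi). lia.
Qed.
End ProductCode.

Lemma model_product_in_C (I : Type) (f : I -> nat) (f_inj : forall i j, f i = f j -> i = j)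
  (kk ll mm : I -> option nat) : in_C (product_open I kk ll mm).
Proof.
  apply (classification _ _ (prod_code I f kk ll mm)).
  - apply prod_open_iff; auto.
  - apply prod_code_injective; auto.
  - apply prod_code_closed; auto.
  - apply prod_dichotomous; auto.
  - apply prod_shaped; auto.
Qed.

Lemma homeomorphic_trans {A B C : Type} (opA : opens A) (opB : opens B) (opC : opens C) :
  homeomorphic opA opB -> homeomorphic opB opC -> homeomorphic opA opC.
Proof.
  intros [f1 [g1 [H1 [H2 [H3 H4]]]]] [f2 [g2 [K1 [K2 [K3 K4]]]]].
  exists (fun a => f2 (f1 a)), (fun c => g1 (g2 c)). repeat split.
  - intros a. rewrite K1, H1. auto.
  - intros c. rewrite H2, K2. auto.
  - intros V HV. apply (H3 (fun b => V (f2 b))). apply K3. auto.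
  - intros U HU. apply (K4 (fun b => U (g1 b))). apply H4. auto.
Qed.

Lemma prod_map_continuous (I : Type) (X Y : I -> Type) (opX : forall i, opens (X i))
  (opY : forall i, opens (Y i)) (h : forall i, X i -> Y i) :
  (forall i, continuous (opX i) (opY i) (h i)) ->
  continuous (prod_open X opX) (prod_open Y opY) (fun x i => h i (x i)).
Proof.
  intros Hh V HV x Hx. destruct (HV _ Hx) as [F [W [W1 [W2 W3]]]].
  exists F, (fun i a => W i (h i a)). repeat split; auto.
  intros i Hi. apply Hh. auto.
Qed.

Lemma prod_homeomorphic (I : Type) (X Y : I -> Type) (opX : forall i, opens (X i))
  (opY : forall i, opens (Y i)) :
  (forall i, homeomorphic (opX i) (opY i)) -> homeomorphic (prod_open X opX) (prod_open Y opY).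
Proof.
  intros H.
  assert (Hfg : forall i, exists fg : (X i -> Y i) * (Y i -> X i),
    (forall a, snd fg (fst fg a) = a) /\ (forall b, fst fg (snd fg b) = b) /\
    continuous (opX i) (opY i) (fst fg) /\ continuous (opY i) (opX i) (snd fg)).
  { intros i. destruct (H i) as [g1 [g2 Hg]]. exists (g1, g2). exact Hg. }
  set (fg := fun i => proj1_sig (constructive_indefinite_description _ (Hfg i))).
  assert (Hspec : forall i, _) by (intros i; exact (proj2_sig (constructive_indefinite_description _ (Hfg i)))).
  exists (fun x i => fst (fg i) (x i)), (fun y i => snd (fg i) (y i)). repeat split.
  - intros x. apply functional_extensionality_dep. intros i. apply (Hspec i).
  - intros y. apply functional_extensionality_dep. intros i. apply (Hspec i).
  - apply prod_map_continuous. intros i. apply (Hspec i).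
  - apply prod_map_continuous. intros i. apply (Hspec i).
Qed.

Theorem mainTheorem2 (I : Type) (HI : countable I)
  (X : I -> Type) (op : forall i, opens (X i))
  (Htop : forall i, is_topology (op i))
  (HC : forall i, in_C (op i)) :
  in_C (prod_open X op).
Proof.
  destruct HI as [f f_inj].
  assert (HC' : forall i, exists t : option nat * option nat * option nat,
     homeomorphic (op i) (model_open (fst (fst t)) (snd (fst t)) (snd t))).
  { intros i. destruct (HC i) as [k [l [m H]]]. exists (k, l, m). exact H. }
  destruct (choice _ HC') as [t Ht].
  set (kk := fun i => fst (fst (t i))). set (ll := fun i => snd (fst (t i))). set (mm := fun i => snd (t i)).
  destruct (model_product_in_C I f f_inj kk ll mm) as [k [l [m Hm]]].
  exists k, l, m. eapply homeomorphic_trans; [|exact Hm].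
  apply prod_homeomorphic. exact Ht.
Qed.
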